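(* For $t\in(0,1)$ and $c\in\mathbb{R}$ define the $2\times2$ matrix $T_1(c,t)$ with entries $(T_1)_{11}=12c-\frac38\sqrt2$, $(T_1)_{12}=12c-\frac{3(t+3)}{(3t^2+2t+3)^{3/2}}-\frac{\sqrt3}{3(t-1)^2}$, $(T_1)_{21}=12ct-\frac{3(3t+1)}{(3t^2+2t+3)^{3/2}}+\frac{\sqrt3t-\sqrt3}{3(t-1)^3}$, $(T_1)_{22}=12ct-\frac{3\sqrt2}{8t^2}$, so that $\det T_1=\alpha_1(t)c+\alpha_0(t)$ with $$\alpha_1(t)=-\frac12\left(9\sqrt2\,t-\frac{72(t^2+6t+1)}{(3t^2+2t+3)^{3/2}}-\frac{8\sqrt3}{t-1}+\frac{9\sqrt2}{t^2}\right),$$ $$\alpha_0(t)=-\frac{9(3t+1)(t+3)}{(3t^2+2t+3)^3}-\frac{2\sqrt3}{(3t^2+2t+3)^{3/2}(t-1)}+\frac{9}{32t^2}+\frac{1}{3(t-1)^4}.$$ Then: (i) $\alpha_1(t)<0$ for $t\in(0,1)$; (ii) $\alpha_0(t)>0$ for $t\in(0,1)$; (iii) $c(t):=-\alpha_0(t)/\alpha_1(t)>0$ for $t\in(0,1)$; (iv) $(T_1)_{11}(c(t),t)>0$ for $t\in(0,1)$; (v) there exists $\delta<1$ such that $(T_1)_{12}(c(t),t)<0$ for $t\in(0,\delta)$ and $(T_1)_{12}(c(t),t)>0$ for $t\in(\delta,1)$. *)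

From Stdlib Require Import Reals.
Open Scope R_scope.

Definition q (t : R) : R := 3 * t ^ 2 + 2 * t + 3.
Definition q32 (t : R) : R := Rpower (q t) (3 / 2).

Definition T11 (c t : R) : R := 12 * c - 3 / 8 * sqrt 2.
Definition T12 (c t : R) : R :=
  12 * c - 3 * (t + 3) / q32 t - sqrt 3 / (3 * (t - 1) ^ 2).
Definition T21 (c t : R) : R :=
  12 * c * t - 3 * (3 * t + 1) / q32 t + (sqrt 3 * t - sqrt 3) / (3 * (t - 1) ^ 3).
Definition T22 (c t : R) : R := 12 * c * t - 3 * sqrt 2 / (8 * t ^ 2).

Definition detT1 (c t : R) : R := T11 c t * T22 c t - T12 c t * T21 c t.

Definition alpha1 (t : R) : R :=
  - (1 / 2) * (9 * sqrt 2 * t - 72 * (t ^ 2 + 6 * t + 1) / q32 t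
               - 8 * sqrt 3 / (t - 1) + 9 * sqrt 2 / t ^ 2).

Definition alpha0 (t : R) : R :=
  - (9 * (3 * t + 1) * (t + 3)) / (q t) ^ 3
  - 2 * sqrt 3 / (q32 t * (t - 1))
  + 9 / (32 * t ^ 2)
  + 1 / (3 * (t - 1) ^ 4).

Definition cfun (t : R) : R := - alpha0 t / alpha1 t.

From Stdlib Require Import Reals Lra Psatz.
From Coquelicot Require Import Coquelicot.
Open Scope R_scope.

(* After clearing denominators, each of -alpha1, alpha0 and the numerators of
   T11(c(t),t) and T12(c(t),t) takes the form A + B sqrt(q t), where A and B are
   polynomials in t, sqrt 2 and sqrt 3.  The sign of A + B s (s > 0, s^2 = q) is
   read off the signs of A, B and of the norm B^2 q - A^2, and each of these
   polynomial signs is certified on a subinterval of (0,1) by a Bernstein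
   expansion whose coefficients stay positive for rational enclosures of sqrt 2
   and sqrt 3.  For T12 we have A < 0 < B on [541/1024, 543/1024], so there its
   sign is that of the norm, which is increasing; delta is the supremum of the
   points where the norm is negative. *)

Lemma q_pos (t : R) : 0 < q t.
Proof. unfold q; nra. Qed.

Lemma sqrt_q_pos (t : R) : 0 < sqrt (q t).
Proof. exact (sqrt_lt_R0 _ (q_pos t)). Qed.

Lemma sqrt_q_sq (t : R) : sqrt (q t) * sqrt (q t) = q t.
Proof. exact (sqrt_sqrt _ (Rlt_le _ _ (q_pos t))). Qed.

Lemma sqrt2_sq : sqrt 2 * sqrt 2 = 2.
Proof. apply sqrt_sqrt; lra. Qed.

Lemma sqrt3_sq : sqrt 3 * sqrt 3 = 3.
Proof. apply sqrt_sqrt; lra. Qed.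

Lemma q32_eq (t : R) : q32 t = q t * sqrt (q t).
Proof.
  unfold q32; replace (3 / 2) with (1 + / 2) by field.
  rewrite Rpower_plus, Rpower_1, Rpower_sqrt by apply q_pos; reflexivity.
Qed.

Lemma q32_pos (t : R) : 0 < q32 t.
Proof. rewrite q32_eq; apply Rmult_lt_0_compat; [apply q_pos | apply sqrt_q_pos]. Qed.

Lemma pow_mul_pow_pos (t : R) (i j : nat) : 0 < t < 1 -> 0 < t ^ i * (1 - t) ^ j.
Proof. intros Ht; apply Rmult_lt_0_compat; apply pow_lt; lra. Qed.

Lemma pos_of_scaled (x d y : R) : x * d = y -> 0 < d -> 0 < y -> 0 < x.
Proof. intros <- Hd Hy; nra. Qed.

Lemma neg_of_scaled (x d y : R) : x * d = y -> 0 < d -> y < 0 -> x < 0.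
Proof. intros <- Hd Hy; nra. Qed.

Lemma increasing_sign_change (f : R -> R) (l h : R) :
  l <= h -> f l < 0 -> (forall x y, l <= x -> x < y -> y <= h -> f x < f y) ->
  exists d, l <= d <= h /\
    (forall t, l <= t < d -> f t < 0) /\ (forall t, d < t <= h -> 0 < f t).
Proof.
  intros Hlh Hl Hincr.
  set (E := fun x => l <= x <= h /\ f x < 0).
  destruct (completeness E) as (d & Hub & Hlub).
  - exists h; intros x Hx; apply Hx.
  - exists l; split; [lra | exact Hl].
  - assert (Hld : l <= d) by (apply Hub; split; [lra | exact Hl]).
    assert (Hdh : d <= h) by (apply Hlub; intros x Hx; apply Hx).
    exists d; split; [lra | split].
    + intros t Ht; destruct (Rlt_le_dec (f t) 0) as [| Hft]; [assumption | exfalso].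
      (* every point of E lies below t, since f is increasing and f t >= 0 *)
      assert (d <= t); [| lra].
      apply Hlub; intros x (Hx & Hfx).
      destruct (Rle_lt_dec x t) as [| Htx]; [assumption |].
      specialize (Hincr t x ltac:(lra) Htx ltac:(lra)); lra.
    + intros t Ht; set (m := (d + t) / 2).
      assert (Hm : 0 <= f m).
      { destruct (Rle_lt_dec 0 (f m)) as [| Hfm]; [assumption |].
        assert (m <= d) by (apply Hub; split; [unfold m; lra | exact Hfm]).
        unfold m in *; lra. }
      specialize (Hincr m t ltac:(unfold m; lra) ltac:(unfold m; lra) ltac:(lra)); lra.
Qed.

Ltac surd_den_pos :=
  repeat (apply Rmult_lt_0_compat || apply pow_lt);
  solve [lra | apply q_pos | apply sqrt_q_pos].

(** * Signs of A + B sqrt Q *)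

Definition surd_norm (A B Q : R) : R := B * B * Q - A * A.

Section SurdSign.

Variables (A B s Q : R).
Hypotheses (s_pos : 0 < s) (s_sq : s * s = Q).

Lemma surd_norm_factor : surd_norm A B Q = (A + B * s) * (B * s - A).
Proof. unfold surd_norm; rewrite <- s_sq; ring. Qed.

Lemma surd_pos_of_nonneg : 0 < A -> 0 <= B -> 0 < A + B * s.
Proof. intros; nra. Qed.

Lemma surd_neg_of_nonpos : A < 0 -> B <= 0 -> A + B * s < 0.
Proof. intros; nra. Qed.

Lemma surd_pos_of_norm_pos : 0 < B -> 0 < surd_norm A B Q -> 0 < A + B * s.
Proof.
  rewrite surd_norm_factor; intros HB HN.
  destruct (Rlt_le_dec 0 (A + B * s)) as [| Hle]; [assumption |].
  assert (0 < B * s) by nra; nra.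
Qed.

Lemma surd_pos_of_norm_neg : 0 < A -> surd_norm A B Q < 0 -> 0 < A + B * s.
Proof.
  rewrite surd_norm_factor; intros HA HN.
  destruct (Rlt_le_dec 0 (A + B * s)) as [| Hle]; [assumption |]; nra.
Qed.

Lemma surd_neg_of_norm_neg : A < 0 -> surd_norm A B Q < 0 -> A + B * s < 0.
Proof.
  rewrite surd_norm_factor; intros HA HN.
  destruct (Rlt_le_dec (A + B * s) 0) as [| Hle]; [assumption |]; nra.
Qed.

Lemma norm_neg_of_surd_neg : 0 <= B -> A + B * s < 0 -> surd_norm A B Q < 0.
Proof.
  rewrite surd_norm_factor; intros HB HAB.
  assert (0 <= B * s) by nra; nra.
Qed.

End SurdSign.

Lemma eq_of_sub_combination (x y r1 r2 r3 X Y Z : R) :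
  r1 = 0 -> r2 = 0 -> r3 = 0 -> x - y = r1 * X + r2 * Y + r3 * Z -> x = y.
Proof. intros -> -> -> H; lra. Qed.

(* Replaces sqrt (q t), sqrt 2, sqrt 3 by variables s, a, b, remembering only
   their squares; an identity is then proved by [field] after subtracting a
   combination of the relations s^2 = q t, a^2 = 2, b^2 = 3. *)
Ltac abstract_surds t s a b :=
  rewrite ?q32_eq;
  pose proof (sqrt_q_pos t) as Hs; pose proof (sqrt_q_sq t) as Hss;
  pose proof sqrt2_sq as Ha; pose proof sqrt3_sq as Hb; pose proof (q_pos t) as Hq;
  revert Hs Hss Ha Hb; generalize (sqrt (q t)) (sqrt 2) (sqrt 3);
  intros s a b Hs Hss Ha Hb.

Ltac field_surds := unfold q in *; field; repeat split; lra.

(** * Bernstein certificates *)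

Notation sqrt2_lo := (1414213562373095048801688724209/1000000000000000000000000000000).
Notation sqrt2_hi := (141421356237309504880168872421/100000000000000000000000000000).
Notation sqrt3_lo := (346410161513775458705489268301/200000000000000000000000000000).
Notation sqrt3_hi := (866025403784438646763723170753/500000000000000000000000000000).

Definition sqrt23_bounds (a b : R) : Prop :=
  sqrt2_lo <= a <= sqrt2_hi /\ sqrt3_lo <= b <= sqrt3_hi /\
  sqrt2_lo * sqrt3_lo <= a * b <= sqrt2_hi * sqrt3_hi.

Lemma sqrt_between (y lo hi : R) :
  0 <= lo -> 0 <= hi -> lo * lo <= y -> y <= hi * hi -> lo <= sqrt y <= hi.
Proof.
  intros Hlo Hhi Hl Hh.
  pose proof (sqrt_sqrt y ltac:(nra)); pose proof (sqrt_pos y); split; nra.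
Qed.

Lemma sqrt23_bounds_sqrt : sqrt23_bounds (sqrt 2) (sqrt 3).
Proof.
  assert (sqrt2_lo <= sqrt 2 <= sqrt2_hi) by (apply sqrt_between; lra).
  assert (sqrt3_lo <= sqrt 3 <= sqrt3_hi) by (apply sqrt_between; lra).
  repeat split; try apply Rmult_le_compat; lra.
Qed.

Lemma pos_of_certificate (c x w p r : R) :
  0 < c -> 0 < w -> 0 < p -> 0 <= r -> c * x = p * (w + r) -> 0 < x.
Proof.
  intros Hc Hw Hp Hr E.
  assert (0 < c * x) by (rewrite E; apply Rmult_lt_0_compat; lra).
  nra.
Qed.

Lemma nonneg_of_certificate (c x p r : R) :
  0 < c -> 0 <= p -> 0 <= r -> c * x = p * r -> 0 <= x.
Proof.
  intros Hc Hp Hr E.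
  assert (0 <= c * x) by (rewrite E; apply Rmult_le_pos; lra).
  nra.
Qed.

Ltac bernstein_terms_nonneg :=
  repeat match goal with
  | |- 0 <= _ + _ => apply Rplus_le_le_0_compat
  | |- 0 <= _ * (_ ^ _ * _ ^ _) =>
      apply Rmult_le_pos; [lra | apply Rmult_le_pos; apply pow_le; lra]
  end.

(* A certificate for P on lo <= k t <= hi writes c * P as
   p * (w + sum of coef * (k t - lo)^i * (hi - k t)^j), where p is a product of
   powers of t and 1 - t and every coef is a linear form in a, b, a * b that is
   nonnegative under [sqrt23_bounds a b]; [ring] checks the expansion. *)
Ltac bernstein_pos P c w p r :=
  lazymatch goal with
  | |- ?x < 0 => enough (0 < - x) by lra
  | _ => idtac
  end;
  apply (pos_of_certificate c _ w p r);
  [lra | lra | apply pow_mul_pow_pos; lra | bernstein_terms_nonneg | unfold P; ring].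

Ltac bernstein_nonneg P c p r :=
  lazymatch goal with
  | |- ?x <= 0 => enough (0 <= - x) by lra
  | _ => idtac
  end;
  apply (nonneg_of_certificate c _ p r);
  [lra | apply Rlt_le, pow_mul_pow_pos; lra | bernstein_terms_nonneg | unfold P; ring].

(** * The coefficients alpha1 and alpha0 *)

Definition alpha1_free (t a b : R) : R :=
  (-72)*t^2 + (-360)*t^3 + 360*t^4 + 72*t^5.

Definition alpha1_surd (t a b : R) : R :=
  27*a + (-9)*t*a + 24*t^2*b + 9*t^2*a + 16*t^3*b + 24*t^4*b + (-9)*t^4*a + 9*t^5*a
  + (-27)*t^6*a.

Definition alpha1_norm (t a b : R) : R :=
  4374 + 5832*t^2 + 3888*t^2*a*b + (-1620)*t^3 + 3888*t^3*a*b + 324*t^4 + 9072*t^4*a*b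
  + (-40176)*t^5 + 3744*t^5*a*b + (-65826)*t^6 + 4032*t^6*a*b + 292488*t^7 + (-65826)*t^8
  + (-4032)*t^8*a*b + (-40176)*t^9 + (-3744)*t^9*a*b + 324*t^10 + (-9072)*t^10*a*b
  + (-1620)*t^11 + (-3888)*t^11*a*b + 5832*t^12 + (-3888)*t^12*a*b + 4374*t^14.

Lemma alpha1_surd_form (t : R) : 0 < t < 1 ->
  - alpha1 t * (2 * t ^ 2 * (1 - t) * q t * sqrt (q t))
  = alpha1_free t (sqrt 2) (sqrt 3) + alpha1_surd t (sqrt 2) (sqrt 3) * sqrt (q t).
Proof.
  intros Ht; unfold alpha1, alpha1_free, alpha1_surd; abstract_surds t s a b.
  field_surds.
Qed.

Lemma alpha1_norm_eq (t a b : R) : a * a = 2 -> b * b = 3 ->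
  surd_norm (alpha1_free t a b) (alpha1_surd t a b) (q t) = alpha1_norm t a b.
Proof.
  intros Ha Hb; symmetry.
  apply (eq_of_sub_combination _ _ (a * a - 2) (b * b - 3) 0
    ((-2187) + (-2916)*t^2 + 810*t^3 + (-162)*t^4 + (-648)*t^5 + 5265*t^6 + (-324)*t^7
      + 5265*t^8 + (-648)*t^9 + (-162)*t^10 + 810*t^11 + (-2916)*t^12 + (-2187)*t^14)
    ((-1728)*t^4 + (-3456)*t^5 + (-7488)*t^6 + (-7424)*t^7 + (-7488)*t^8 + (-3456)*t^9
      + (-1728)*t^10)
    0); [lra | lra | lra |].
  unfold surd_norm, alpha1_norm, alpha1_free, alpha1_surd, q; ring.
Qed.

Lemma alpha1_surd_pos (t a b : R) :
  sqrt23_bounds a b -> 0 < t < 1 -> 0 < alpha1_surd t a b.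
Proof.
  intros (? & ? & ?) Ht.
  bernstein_pos alpha1_surd 1 1 (t^0*(1-t)^0)
    (((-1) + 27*a)*(t^0*(1-t)^6)
     + ((-6) + 153*a)*(t^1*(1-t)^5)
     + ((-15) + 369*a + 24*b)*(t^2*(1-t)^4)
     + ((-20) + 486*a + 112*b)*(t^3*(1-t)^3)
     + ((-15) + 360*a + 216*b)*(t^4*(1-t)^2)
     + ((-6) + 144*a + 192*b)*(t^5*(1-t)^1)
     + ((-1) + 64*b)*(t^6*(1-t)^0)).
Qed.

Lemma alpha1_norm_pos (t a b : R) :
  sqrt23_bounds a b -> 0 < t < 1 -> 0 < alpha1_norm t a b.
Proof.
  intros (? & ? & ?) Ht.
  bernstein_pos alpha1_norm 1 1 (t^0*(1-t)^0)
    ((4373)*(t^0*(1-t)^14)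
     + (61222)*(t^1*(1-t)^13)
     + (403775 + 3888*(a*b))*(t^2*(1-t)^12)
     + (1660136 + 50544*(a*b))*(t^3*(1-t)^11)
     + (4744789 + 308448*(a*b))*(t^4*(1-t)^10)
     + (9911750 + 1163664*(a*b))*(t^5*(1-t)^9)
     + (15338829 + 3012048*(a*b))*(t^6*(1-t)^8)
     + (17450904 + 5618016*(a*b))*(t^7*(1-t)^7)
     + (14604165 + 7717248*(a*b))*(t^8*(1-t)^6)
     + (9665582 + 7831296*(a*b))*(t^9*(1-t)^5)
     + (6176791 + 5778432*(a*b))*(t^10*(1-t)^4)
     + (4103828 + 2967552*(a*b))*(t^11*(1-t)^3)
     + (2174885 + 958464*(a*b))*(t^12*(1-t)^2)
     + (688114 + 147456*(a*b))*(t^13*(1-t)^1)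
     + (98303)*(t^14*(1-t)^0)).
Qed.

Lemma alpha1_neg (t : R) : 0 < t < 1 -> alpha1 t < 0.
Proof.
  intros Ht; enough (0 < - alpha1 t) by lra.
  apply (pos_of_scaled _ _ _ (alpha1_surd_form t Ht)); [surd_den_pos |].
  apply (surd_pos_of_norm_pos _ _ _ _ (sqrt_q_pos t) (sqrt_q_sq t)).
  - exact (alpha1_surd_pos t _ _ sqrt23_bounds_sqrt Ht).
  - rewrite alpha1_norm_eq by (apply sqrt2_sq || apply sqrt3_sq).
    exact (alpha1_norm_pos t _ _ sqrt23_bounds_sqrt Ht).
Qed.

Definition alpha0_free (t a b : R) : R :=
  1728*t^2*b + (-2880)*t^3*b + 2496*t^4*b + (-5184)*t^5*b + 5184*t^6*b + (-2496)*t^7*b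
  + 2880*t^8*b + (-1728)*t^9*b.

Definition alpha0_surd (t a b : R) : R :=
  729 + (-1458)*t + (-27)*t^2 + (-216)*t^3 + 24642*t^4 + (-30956)*t^5 + 24642*t^6
  + (-216)*t^7 + (-27)*t^8 + (-1458)*t^9 + 729*t^10.

Lemma alpha0_surd_form (t : R) : 0 < t < 1 ->
  alpha0 t * (96 * t ^ 2 * (1 - t) ^ 4 * q t ^ 3 * sqrt (q t))
  = alpha0_free t (sqrt 2) (sqrt 3) + alpha0_surd t (sqrt 2) (sqrt 3) * sqrt (q t).
Proof.
  intros Ht; unfold alpha0, alpha0_free, alpha0_surd; abstract_surds t s a b.
  field_surds.
Qed.

Lemma alpha0_free_pos (t a b : R) :
  sqrt23_bounds a b -> 0 < t < 1 -> 0 < alpha0_free t a b.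
Proof.
  intros (? & ? & ?) Ht.
  bernstein_pos alpha0_free 1 1 (t^2*(1-t)^3)
    (((-1) + 1728*b)*(t^0*(1-t)^4)
     + ((-4) + 9216*b)*(t^1*(1-t)^3)
     + ((-6) + 21504*b)*(t^2*(1-t)^2)
     + ((-4) + 24576*b)*(t^3*(1-t)^1)
     + ((-1) + 12288*b)*(t^4*(1-t)^0)).
Qed.

Lemma alpha0_surd_nonneg (t a b : R) :
  sqrt23_bounds a b -> 0 < t < 1 -> 0 <= alpha0_surd t a b.
Proof.
  intros (? & ? & ?) Ht.
  bernstein_nonneg alpha0_surd 1 (t^0*(1-t)^0)
    ((729)*(t^0*(1-t)^10)
     + (5832)*(t^1*(1-t)^9)
     + (19656)*(t^2*(1-t)^8)
     + (34560)*(t^3*(1-t)^7)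
     + (52992)*(t^4*(1-t)^6)
     + (110848)*(t^5*(1-t)^5)
     + (199424)*(t^6*(1-t)^4)
     + (237568)*(t^7*(1-t)^3)
     + (182272)*(t^8*(1-t)^2)
     + (81920)*(t^9*(1-t)^1)
     + (16384)*(t^10*(1-t)^0)).
Qed.

Lemma alpha0_pos (t : R) : 0 < t < 1 -> 0 < alpha0 t.
Proof.
  intros Ht.
  apply (pos_of_scaled _ _ _ (alpha0_surd_form t Ht)); [surd_den_pos |].
  apply surd_pos_of_nonneg; [apply sqrt_q_pos | |].
  - exact (alpha0_free_pos t _ _ sqrt23_bounds_sqrt Ht).
  - exact (alpha0_surd_nonneg t _ _ sqrt23_bounds_sqrt Ht).
Qed.

Lemma cfun_pos (t : R) : 0 < t < 1 -> 0 < cfun t.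
Proof.
  intros Ht; pose proof (alpha1_neg t Ht); pose proof (alpha0_pos t Ht).
  unfold cfun; replace (- alpha0 t / alpha1 t) with (alpha0 t / - alpha1 t) by (field; lra).
  apply Rdiv_lt_0_compat; lra.
Qed.

(** * The entry T11 at c(t) *)

Definition T11_num (t : R) : R := 32 * alpha0 t + sqrt 2 * alpha1 t.

Lemma T11_cfun (t : R) : alpha1 t < 0 -> T11 (cfun t) t = 3 / 8 * T11_num t / - alpha1 t.
Proof. intros; unfold T11, T11_num, cfun; field; lra. Qed.

Definition T11_free (t a b : R) : R :=
  3456*t^2*b + 1944*t^2*a + (-5760)*t^3*b + 6480*t^3*a + 4992*t^4*b + (-23112)*t^4*a
  + (-10368)*t^5*b + 22464*t^5*a + 10368*t^6*b + (-34128)*t^6*a + (-4992)*t^7*b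
  + 52704*t^7*a + 5760*t^8*b + (-34128)*t^8*a + (-3456)*t^9*b + 22464*t^9*a
  + (-23112)*t^10*a + 6480*t^11*a + 1944*t^12*a.

Definition T11_surd (t a b : R) : R :=
  (-3456)*t^2 + (-648)*t^2*a*b + 5454*t^3 + 648*t^3*a*b + 43236*t^4 + (-864)*t^4*a*b
  + (-58186)*t^5 + 2400*t^5*a*b + 47664*t^6 + (-1584)*t^6*a*b + (-2052)*t^7 + 1584*t^7*a*b
  + 3672*t^8 + (-2400)*t^8*a*b + (-8964)*t^9 + 864*t^9*a*b + 7344*t^10 + (-648)*t^10*a*b
  + (-3402)*t^11 + 648*t^11*a*b + 2916*t^12 + (-1458)*t^13.

Definition T11_norm (t a b : R) : R :=
  (-30233088)*t^5 + (-48079008)*t^5*a*b + (-928982196)*t^6 + 76352544*t^6*a*b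
  + 2709217368*t^7 + (-250247232)*t^7*a*b + 1705954068*t^8 + 377068608*t^8*a*b
  + (-5890142448)*t^9 + (-576328608)*t^9*a*b + 10162444836*t^10 + 918874656*t^10*a*b
  + (-5972494984)*t^11 + (-837996288)*t^11*a*b + 7988055996*t^12 + 1055450880*t^12*a*b
  + (-2153901888)*t^13 + (-973134144)*t^13*a*b + (-3477657672)*t^14 + 554187840*t^14*a*b
  + 6989356080*t^15 + (-519361920)*t^15*a*b + (-4342805496)*t^16 + 116069760*t^16*a*b
  + 2699821152*t^17 + 138511296*t^17*a*b + (-883819512)*t^18 + (-180709056)*t^18*a*b
  + 9646128*t^19 + 285513984*t^19*a*b + 297566136*t^20 + (-251506944)*t^20*a*b
  + (-625423680)*t^21 + 177829344*t^21*a*b + 563624892*t^22 + (-117083232)*t^22*a*b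
  + (-362009736)*t^23 + 73483200*t^23*a*b + 214387236*t^24 + (-26453952)*t^24*a*b
  + (-112429296)*t^25 + 13226976*t^25*a*b + 44641044*t^26 + (-5668704)*t^26*a*b
  + (-21257640)*t^27 + 6377292*t^28.

Lemma T11_surd_form (t : R) : 0 < t < 1 ->
  T11_num t * (6 * t ^ 2 * (1 - t) ^ 4 * q t ^ 3 * sqrt (q t))
  = T11_free t (sqrt 2) (sqrt 3) + T11_surd t (sqrt 2) (sqrt 3) * sqrt (q t).
Proof.
  intros Ht; unfold T11_num, alpha0, alpha1, T11_free, T11_surd; abstract_surds t s a b.
  apply (eq_of_sub_combination _ _ (s * s - q t) (a * a - 2) (b * b - 3) 0
    ((-729)*s + 1458*t*s + (-1701)*t^2*s + 2943*t^3*s + (-3024)*t^4*s + 1863*t^5*s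
      + (-810)*t^6*s + (-810)*t^7*s + 1863*t^8*s + (-3024)*t^9*s + 2943*t^10*s
      + (-1701)*t^11*s + 1458*t^12*s + (-729)*t^13*s)
    0); [lra | lra | lra |].
  field_surds.
Qed.

Lemma T11_norm_eq (t a b : R) : a * a = 2 -> b * b = 3 ->
  surd_norm (T11_free t a b) (T11_surd t a b) (q t) = T11_norm t a b.
Proof.
  intros Ha Hb; symmetry.
  apply (eq_of_sub_combination _ _ (a * a - 2) (b * b - 3) 0
    (3779136*t^4 + (-1259712)*t^4*b^2 + 25194240*t^5 + 1679616*t^5*b^2 + (-47869056)*t^6
      + (-4199040)*t^6*b^2 + (-212191488)*t^7 + 12130560*t^7*b^2 + 692608320*t^8
      + (-13887936)*t^8*b^2 + (-1275761664)*t^9 + 25629696*t^9*b^2 + 2632518144*t^10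
      + (-42204672)*t^10*b^2 + (-4324451328)*t^11 + 41149440*t^11*b^2 + 5311412352*t^12
      + (-60497280)*t^12*b^2 + (-6443380224)*t^13 + 70405632*t^13*b^2 + 7276283136*t^14
      + (-57892608)*t^14*b^2 + (-6443380224)*t^15 + 70405632*t^15*b^2 + 5311412352*t^16
      + (-60497280)*t^16*b^2 + (-4324451328)*t^17 + 41149440*t^17*b^2 + 2632518144*t^18
      + (-42204672)*t^18*b^2 + (-1275761664)*t^19 + 25629696*t^19*b^2 + 692608320*t^20
      + (-13887936)*t^20*b^2 + (-212191488)*t^21 + 12130560*t^21*b^2 + (-47869056)*t^22
      + (-4199040)*t^22*b^2 + 25194240*t^23 + 1679616*t^23*b^2 + 3779136*t^24
      + (-1259712)*t^24*b^2)
    (9424512*t^4 + (-36453888)*t^5 + 59284224*t^6 + (-104910336)*t^7 + 188247168*t^8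
      + (-206198784)*t^9 + 223921152*t^10 + (-272775168)*t^11 + 187335936*t^12
      + (-116646912)*t^13 + 100237824*t^14 + 11639808*t^15 + (-53312256)*t^16
      + 42485760*t^17 + (-72465408)*t^18 + 51259392*t^19 + (-27775872)*t^20 + 24261120*t^21
      + (-8398080)*t^22 + 3359232*t^23 + (-2519424)*t^24)
    0); [lra | lra | lra |].
  unfold surd_norm, T11_norm, T11_free, T11_surd, q; ring.
Qed.

Lemma T11_free_pos (t a b : R) :
  sqrt23_bounds a b -> 0 < t < 1 -> 0 < T11_free t a b.
Proof.
  intros (? & ? & ?) Ht.
  destruct (Rle_lt_dec t (1/4)); [|destruct (Rle_lt_dec t (3/8)); [|destruct (Rle_lt_dec t (1/2))]].
  - bernstein_pos T11_free 16384 1 (t^2*(1-t)^3)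
      (((-1) + 31850496*a + 56623104*b)*((4*t)^0*(1-4*t)^7)
       + ((-7) + 273383424*a + 415236096*b)*((4*t)^1*(1-4*t)^6)
       + ((-21) + 979623936*a + 1310982144*b)*((4*t)^2*(1-4*t)^5)
       + ((-35) + 1915066368*a + 2309357568*b)*((4*t)^3*(1-4*t)^4)
       + ((-35) + 2216194560*a + 2450743296*b)*((4*t)^4*(1-4*t)^3)
       + ((-21) + 1522406016*a + 1566449664*b)*((4*t)^5*(1-4*t)^2)
       + ((-7) + 575671968*a + 558243840*b)*((4*t)^6*(1-4*t)^1)
       + ((-1) + 92483208*a + 85549056*b)*((4*t)^7*(1-4*t)^0)).
  - bernstein_pos T11_free 2097152 1 (t^2*(1-t)^3)
      (((-1) + 11837850624*a + 10950279168*b)*((8*t-2)^0*(3-8*t)^7)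
       + ((-7) + 87454425600*a + 79250325504*b)*((8*t-2)^1*(3-8*t)^6)
       + ((-21) + 276468380928*a + 245978628096*b)*((8*t-2)^2*(3-8*t)^5)
       + ((-35) + 484812984960*a + 424431058944*b)*((8*t-2)^3*(3-8*t)^4)
       + ((-35) + 509314440384*a + 439686463488*b)*((8*t-2)^4*(3-8*t)^3)
       + ((-21) + 320525843040*a + 273460297728*b)*((8*t-2)^5*(3-8*t)^2)
       + ((-7) + 111879873648*a + 94542299136*b)*((8*t-2)^6*(3-8*t)^1)
       + ((-1) + 16707290040*a + 14015987712*b)*((8*t-2)^7*(3-8*t)^0)).
  - bernstein_pos T11_free 2097152 1 (t^2*(1-t)^3)
      (((-1) + 16707290040*a + 14015987712*b)*((8*t-3)^0*(4-8*t)^7)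
       + ((-7) + 122022186912*a + 101681528832*b)*((8*t-3)^1*(4-8*t)^6)
       + ((-21) + 381379722624*a + 316295675904*b)*((8*t-3)^2*(4-8*t)^5)
       + ((-35) + 661192782336*a + 546855124992*b)*((8*t-3)^3*(4-8*t)^4)
       + ((-35) + 686633822208*a + 567536517120*b)*((8*t-3)^4*(4-8*t)^3)
       + ((-21) + 427059634176*a + 353548369920*b)*((8*t-3)^5*(4-8*t)^2)
       + ((-7) + 147272269824*a + 122406567936*b)*((8*t-3)^6*(4-8*t)^1)
       + ((-1) + 21718499328*a + 18169724928*b)*((8*t-3)^7*(4-8*t)^0)).
  - bernstein_pos T11_free 128 1 (t^2*(1-t)^3)
      (((-1) + 1325592*a + 1108992*b)*((2*t-1)^0*(2-2*t)^7)
       + ((-7) + 10440576*a + 8930304*b)*((2*t-1)^1*(2-2*t)^6)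
       + ((-21) + 34331904*a + 30950400*b)*((2*t-1)^2*(2-2*t)^5)
       + ((-35) + 60383232*a + 59796480*b)*((2*t-1)^3*(2-2*t)^4)
       + ((-35) + 59940864*a + 69500928*b)*((2*t-1)^4*(2-2*t)^3)
       + ((-21) + 31850496*a + 48562176*b)*((2*t-1)^5*(2-2*t)^2)
       + ((-7) + 7077888*a + 18874368*b)*((2*t-1)^6*(2-2*t)^1)
       + ((-1) + 3145728*b)*((2*t-1)^7*(2-2*t)^0)).
Qed.

Lemma T11_norm_neg (t a b : R) :
  sqrt23_bounds a b -> 0 < t <= 3/8 -> T11_norm t a b < 0.
Proof.
  intros (? & ? & ?) Ht.
  destruct (Rle_lt_dec t (1/4)).
  - bernstein_pos T11_norm 70368744177664 1 (t^5*(1-t)^0)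
      ((2127464435172803346431 + 3383259414267860877312*(a*b))*((4*t)^0*(1-4*t)^23)
       + (65274509632956606185449 + 76471758369148341583872*(a*b))*((4*t)^1*(1-4*t)^22)
       + (885875445833171327778563 + 827514651277105746149376*(a*b))*((4*t)^2*(1-4*t)^21)
       + (7290836435640438812047637 + 5704169324895370066526208*(a*b))*((4*t)^3*(1-4*t)^20)
       + (41468551419168505548758377 + 28113213924863211598774272*(a*b))*((4*t)^4*(1-4*t)^19)
       + (174961211606796694255008911 + 105405699456624935798046720*(a*b))*((4*t)^5*(1-4*t)^18)
       + (571946396506668711823701421 + 312298262752604925915561984*(a*b))*((4*t)^6*(1-4*t)^17)
       + (1490862383510461492577976923 + 749740419336151205117165568*(a*b))*((4*t)^7*(1-4*t)^16)
       + (3160364863275936576962069686 + 1483642839042837773744603136*(a*b))*((4*t)^8*(1-4*t)^15)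
       + (5523034251151501154694957018 + 2448814322564429303425007616*(a*b))*((4*t)^9*(1-4*t)^14)
       + (8031336767209363205054696190 + 3398144288906474620880683008*(a*b))*((4*t)^10*(1-4*t)^13)
       + (9775175442858704266014187122 + 3984014974214716315297382400*(a*b))*((4*t)^11*(1-4*t)^12)
       + (9988773336215139552963812978 + 3955576645651616396816154624*(a*b))*((4*t)^12*(1-4*t)^11)
       + (8573465945897170806120549118 + 3325810638832219867569979392*(a*b))*((4*t)^13*(1-4*t)^10)
       + (6168220411942647165550299098 + 2362358967793399516794716160*(a*b))*((4*t)^14*(1-4*t)^9)
       + (3702034271258837789890872502 + 1410585180865865740959350784*(a*b))*((4*t)^15*(1-4*t)^8)
       + (1838799066223122970625983067 + 702399517207919486323654656*(a*b))*((4*t)^16*(1-4*t)^7)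
       + (746848945838288344297158061 + 288235188466008657628102656*(a*b))*((4*t)^17*(1-4*t)^6)
       + (243750610247010233031007375 + 95812770835285570832105472*(a*b))*((4*t)^18*(1-4*t)^5)
       + (62309872324805005023385961 + 25159712733529005278281728*(a*b))*((4*t)^19*(1-4*t)^4)
       + (12000927180522060292285717 + 5024039298591459247392768*(a*b))*((4*t)^20*(1-4*t)^3)
       + (1634995284162894827891139 + 716978390156008113802752*(a*b))*((4*t)^21*(1-4*t)^2)
       + (140168707928501364086793 + 65144745123936760562688*(a*b))*((4*t)^22*(1-4*t)^1)
       + (5671161773984221228563 + 2832126442714926005760*(a*b))*((4*t)^23*(1-4*t)^0)).
  - bernstein_pos T11_norm 590295810358705651712 1 (t^5*(1-t)^0)
      ((47573153026538230071701798911 + 23757598534369970011326382080*(a*b))*((8*t-2)^0*(3-8*t)^23)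
       + (1053363607076223952078923366377 + 546400284383455514815635652608*(a*b))*((8*t-2)^1*(3-8*t)^22)
       + (11108815303331286164390310575875 + 6010809083836379287846102499328*(a*b))*((8*t-2)^2*(3-8*t)^21)
       + (74208745341572333609549333264661 + 42082987440731212773880680677376*(a*b))*((8*t-2)^3*(3-8*t)^20)
       + (352242678415133764886063457754473 + 210472723613797860553124053254144*(a*b))*((8*t-2)^4*(3-8*t)^19)
       + (1263107698872003878012537336200335 + 800091562786047544426206609801216*(a*b))*((8*t-2)^5*(3-8*t)^18)
       + (3551060810907352079290641436538285 + 2401372498284472756765266970411008*(a*b))*((8*t-2)^6*(3-8*t)^17)
       + (8015895330158728094659011685139035 + 5835049608283730997945436804743168*(a*b))*((8*t-2)^7*(3-8*t)^16)
       + (14756009949465816922142461080143030 + 11677272560121056859949070473494528*(a*b))*((8*t-2)^8*(3-8*t)^15)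
       + (22366665421767485264467572161349594 + 19475422371902380590883607452581888*(a*b))*((8*t-2)^9*(3-8*t)^14)
       + (28053750661342106872423032871947006 + 27285916645872978885584797927735296*(a*b))*((8*t-2)^10*(3-8*t)^13)
       + (29131969317944565592067786102791794 + 32272807726945913467019947306647552*(a*b))*((8*t-2)^11*(3-8*t)^12)
       + (24936959516991450972025292603268722 + 32300194125109897752955733869068288*(a*b))*((8*t-2)^12*(3-8*t)^11)
       + (17402773941479995831477627516054270 + 27355242634654930676715575904829440*(a*b))*((8*t-2)^13*(3-8*t)^10)
       + (9681912724704699947051559034550234 + 19557492914569275965247275919212544*(a*b))*((8*t-2)^14*(3-8*t)^9)
       + (4094483930536601237588021400984758 + 11745631532787047783894004956921856*(a*b))*((8*t-2)^15*(3-8*t)^8)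
       + (1156615714425664998844454092551259 + 5878497056806691023838507755044864*(a*b))*((8*t-2)^16*(3-8*t)^7)
       + (95571773574059919852148633299629 + 2422924994710095387592741183193088*(a*b))*((8*t-2)^17*(3-8*t)^6)
       + ((-99774430278968334007973627077873) + 808433774222127841035874499788800*(a*b))*((8*t-2)^18*(3-8*t)^5)
       + ((-62167415717236365772094196816983) + 212953253576656255818517092483072*(a*b))*((8*t-2)^19*(3-8*t)^4)
       + ((-19875060223473334442250733127179) + 42631620551684598015888363270144*(a*b))*((8*t-2)^20*(3-8*t)^3)
       + ((-3940214935914721571236591921741) + 6095956929030518888231188162560*(a*b))*((8*t-2)^21*(3-8*t)^2)
       + ((-461800500614423814594020013887) + 554682080331107579411977420800*(a*b))*((8*t-2)^22*(3-8*t)^1)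
       + ((-24738923409999549854101180165) + 24137613737509309844421888000*(a*b))*((8*t-2)^23*(3-8*t)^0)).
Qed.

Lemma T11_surd_nonneg (t a b : R) :
  sqrt23_bounds a b -> 3/8 <= t < 1 -> 0 <= T11_surd t a b.
Proof.
  intros (? & ? & ?) Ht.
  destruct (Rle_lt_dec t (1/2)).
  - bernstein_nonneg T11_surd 8589934592 (t^2*(1-t)^0)
      ((21746571040026 + (-3654559296000)*(a*b))*((8*t-3)^0*(4-8*t)^11)
       + (264151640373192 + (-39403540454400)*(a*b))*((8*t-3)^1*(4-8*t)^10)
       + (1447748519323104 + (-192936487057920)*(a*b))*((8*t-3)^2*(4-8*t)^9)
       + (4731275233169792 + (-566267982661632)*(a*b))*((8*t-3)^3*(4-8*t)^8)
       + (10253174180340736 + (-1106855591313408)*(a*b))*((8*t-3)^4*(4-8*t)^7)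
       + (15482458788024320 + (-1512813846724608)*(a*b))*((8*t-3)^5*(4-8*t)^6)
       + (16632492153487360 + (-1475211116150784)*(a*b))*((8*t-3)^6*(4-8*t)^5)
       + (12718246356254720 + (-1026293222080512)*(a*b))*((8*t-3)^7*(4-8*t)^4)
       + (6786693397086208 + (-499157651423232)*(a*b))*((8*t-3)^8*(4-8*t)^3)
       + (2407777312440320 + (-161635960356864)*(a*b))*((8*t-3)^9*(4-8*t)^2)
       + (511301870682112 + (-31360945225728)*(a*b))*((8*t-3)^10*(4-8*t)^1)
       + (49247361695744 + (-2761798189056)*(a*b))*((8*t-3)^11*(4-8*t)^0)).
  - bernstein_nonneg T11_surd 2048 (t^2*(1-t)^0)
      ((11741486 + (-658464)*(a*b))*((2*t-1)^0*(2-2*t)^11)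
       + (158166268 + (-6307392)*(a*b))*((2*t-1)^1*(2-2*t)^10)
       + (948711680 + (-26573856)*(a*b))*((2*t-1)^2*(2-2*t)^9)
       + (3366399872 + (-64286208)*(a*b))*((2*t-1)^3*(2-2*t)^8)
       + (7888168960 + (-97625088)*(a*b))*((2*t-1)^4*(2-2*t)^7)
       + (12859351040 + (-95256576)*(a*b))*((2*t-1)^5*(2-2*t)^6)
       + (14918778880 + (-58294272)*(a*b))*((2*t-1)^6*(2-2*t)^5)
       + (12339052544 + (-20447232)*(a*b))*((2*t-1)^7*(2-2*t)^4)
       + (7138705408 + (-3145728)*(a*b))*((2*t-1)^8*(2-2*t)^3)
       + (2753560576)*((2*t-1)^9*(2-2*t)^2)
       + (637534208)*((2*t-1)^10*(2-2*t)^1)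
       + (67108864)*((2*t-1)^11*(2-2*t)^0)).
Qed.

Lemma T11_num_pos (t : R) : 0 < t < 1 -> 0 < T11_num t.
Proof.
  intros Ht.
  apply (pos_of_scaled _ _ _ (T11_surd_form t Ht)); [surd_den_pos |].
  pose proof (T11_free_pos t _ _ sqrt23_bounds_sqrt Ht).
  destruct (Rle_lt_dec t (3/8)).
  - apply (surd_pos_of_norm_neg _ _ _ _ (sqrt_q_sq t)); [assumption |].
    rewrite T11_norm_eq by (apply sqrt2_sq || apply sqrt3_sq).
    apply T11_norm_neg; [exact sqrt23_bounds_sqrt | lra].
  - apply surd_pos_of_nonneg; [apply sqrt_q_pos | assumption |].
    apply T11_surd_nonneg; [exact sqrt23_bounds_sqrt | lra].
Qed.

Lemma T11_cfun_pos (t : R) : 0 < t < 1 -> 0 < T11 (cfun t) t.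
Proof.
  intros Ht; pose proof (alpha1_neg t Ht); pose proof (T11_num_pos t Ht).
  rewrite T11_cfun by assumption; apply Rdiv_lt_0_compat; lra.
Qed.

(** * The entry T12 at c(t) *)

Definition T12_num (t : R) : R :=
  12 * alpha0 t + (3 * (t + 3) / q32 t + sqrt 3 / (3 * (t - 1) ^ 2)) * alpha1 t.

Lemma T12_cfun (t : R) : 0 < t < 1 -> alpha1 t < 0 -> T12 (cfun t) t = T12_num t / - alpha1 t.
Proof.
  intros Ht Ha; pose proof (q32_pos t).
  unfold T12, T12_num, cfun; field; repeat split; lra.
Qed.

Definition T12_free (t a b : R) : R :=
  6561 + (-2916)*a*b + (-8748)*t + (-1944)*t*a*b + 13122*t^2 + (-6804)*t^2*a*b + 41796*t^3
  + 1404*t^3*a*b + (-132273)*t^4 + (-1440)*t^4*a*b + 169128*t^5 + 6876*t^5*a*b + 27036*t^6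
  + 4824*t^6*a*b + 201768*t^7 + 4824*t^7*a*b + 42831*t^8 + 6876*t^8*a*b + (-35964)*t^9
  + (-1440)*t^9*a*b + 54594*t^10 + 1404*t^10*a*b + 6804*t^11 + (-6804)*t^11*a*b + 6561*t^12
  + (-1944)*t^12*a*b + (-2916)*t^13*a*b.

Definition T12_surd (t a b : R) : R :=
  (-8748)*a + 20412*t*a + (-19440)*t^2*a + 15552*t^3*b + 21060*t^3*a + (-5184)*t^4*b
  + (-19116)*t^4*a + 8640*t^5*b + 1944*t^5*a + (-30528)*t^6*b + 15552*t^6*a + 576*t^7*b
  + (-25272)*t^7*a + (-6336)*t^8*b + 20412*t^8*a + 12096*t^9*b + (-17172)*t^9*a
  + 5184*t^10*b + 14256*t^10*a + (-972)*t^11*a + (-2916)*t^12*a.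

Definition T12_norm (t a b : R) : R :=
  365099967 + 38263752*a*b + (-1789893288)*t + (-25509168)*t*a*b + 3061808748*t^2
  + 131797368*t^2*a*b + (-6516647640)*t^3 + (-658986840)*t^3*a*b + 11324377854*t^4
  + 1245697704*t^4*a*b + (-15792117048)*t^5 + (-1378912248)*t^5*a*b + 15569314236*t^6
  + 4464891720*t^6*a*b + 665402040*t^7 + (-2715361704)*t^7*a*b + (-27414588591)*t^8
  + 6090637536*t^8*a*b + 41095370736*t^9 + (-3721727736)*t^9*a*b + (-59269991976)*t^10
  + 3918226608*t^10*a*b + 49738324752*t^11 + (-2510468208)*t^11*a*b + (-63998581788)*t^12
  + (-2784821040)*t^12*a*b + (-26268411888)*t^13 + (-438501168)*t^13*a*b
  + (-6119264808)*t^14 + (-7083668592)*t^14*a*b + (-40764143376)*t^15 + 2916705456*t^15*a*b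
  + 17073752913*t^16 + (-5450501880)*t^16*a*b + (-40814736840)*t^17 + 3739009248*t^17*a*b
  + (-798481476)*t^18 + (-1696145832)*t^18*a*b + (-5879116728)*t^19 + 3163002696*t^19*a*b
  + 3056188158*t^20 + 842659848*t^20*a*b + (-45927000)*t^21 + 1460688552*t^21*a*b
  + (-314219412)*t^22 + 308471976*t^22*a*b + (-59049000)*t^23 + 131797368*t^23*a*b
  + (-723291201)*t^24 + (-25509168)*t^24*a*b + 38263752*t^25*a*b.

Definition T12_norm_deriv (t a b : R) : R :=
  (-1789893288) + (-25509168)*a*b + 6123617496*t + 263594736*t*a*b + (-19549942920)*t^2
  + (-1976960520)*t^2*a*b + 45297511416*t^3 + 4982790816*t^3*a*b + (-78960585240)*t^4
  + (-6894561240)*t^4*a*b + 93415885416*t^5 + 26789350320*t^5*a*b + 4657814280*t^6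
  + (-19007531928)*t^6*a*b + (-219316708728)*t^7 + 48725100288*t^7*a*b + 369858336624*t^8
  + (-33495549624)*t^8*a*b + (-592699919760)*t^9 + 39182266080*t^9*a*b + 547121572272*t^10
  + (-27615150288)*t^10*a*b + (-767982981456)*t^11 + (-33417852480)*t^11*a*b
  + (-341489354544)*t^12 + (-5700515184)*t^12*a*b + (-85669707312)*t^13
  + (-99171360288)*t^13*a*b + (-611462150640)*t^14 + 43750581840*t^14*a*b
  + 273180046608*t^15 + (-87208030080)*t^15*a*b + (-693850526280)*t^16
  + 63563157216*t^16*a*b + (-14372666568)*t^17 + (-30530624976)*t^17*a*b
  + (-111703217832)*t^18 + 60097051224*t^18*a*b + 61123763160*t^19 + 16853196960*t^19*a*b
  + (-964467000)*t^20 + 30674459592*t^20*a*b + (-6912827064)*t^21 + 6786383472*t^21*a*b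
  + (-1358127000)*t^22 + 3031339464*t^22*a*b + (-17358988824)*t^23 + (-612220032)*t^23*a*b
  + 956593800*t^24*a*b.

Lemma T12_surd_form (t : R) : 0 < t < 1 ->
  T12_num t * (24 * t ^ 2 * (1 - t) ^ 4 * q t ^ 3 * sqrt (q t) ^ 2)
  = T12_free t (sqrt 2) (sqrt 3) + T12_surd t (sqrt 2) (sqrt 3) * sqrt (q t).
Proof.
  intros Ht; unfold T12_num, alpha0, alpha1, T12_free, T12_surd; abstract_surds t s a b.
  apply (eq_of_sub_combination _ _ (s * s - q t) (a * a - 2) (b * b - 3)
    (2187 + (-972)*a*b + (-4374)*t + (-81)*t^2 + (-864)*t^2*b^2 + (-1296)*t^2*a*b
      + (-648)*t^3 + (-864)*t^3*b^2 + 1332*t^3*a*b + 73926*t^4 + (-2016)*t^4*b^2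
      + (-72)*t^4*a*b + (-92868)*t^5 + 32*t^5*b^2 + 1008*t^5*a*b + 73926*t^6 + (-32)*t^6*b^2
      + 1008*t^6*a*b + (-648)*t^7 + 2016*t^7*b^2 + (-72)*t^7*a*b + (-81)*t^8 + 864*t^8*b^2
      + 1332*t^8*a*b + (-4374)*t^9 + 864*t^9*b^2 + (-1296)*t^9*a*b + 2187*t^10
      + (-972)*t^11*a*b)
    0
    ((-2592)*t^2 + (-4320)*t^3 + (-10368)*t^4 + (-6528)*t^5 + (-6080)*t^6 + 6080*t^7
      + 6528*t^8 + 10368*t^9 + 4320*t^10 + 2592*t^11)); [lra | lra | lra |].
  field_surds.
Qed.

Lemma T12_norm_eq (t a b : R) : a * a = 2 -> b * b = 3 ->
  surd_norm (T12_free t a b) (T12_surd t a b) (q t) = T12_norm t a b.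
Proof.
  intros Ha Hb; symmetry.
  apply (eq_of_sub_combination _ _ (a * a - 2) (b * b - 3) 0
    ((-229582512) + 8503056*b^2 + 918330048*t + 11337408*t*b^2 + (-1785641760)*t^2
      + 43460064*t^2*b^2 + 3044094048*t^3 + 18265824*t^3*b^2 + (-4662509040)*t^4
      + 49233744*t^4*b^2 + 5241661632*t^5 + (-53607744)*t^5*b^2 + (-4431981744)*t^6
      + (-33300720)*t^6*b^2 + 2322698976*t^7 + (-144501408)*t^7*b^2 + 1263911040*t^8
      + (-103120128)*t^8*b^2 + (-5587662528)*t^9 + (-90237888)*t^9*b^2 + 9442486224*t^10
      + (-49225968)*t^10*b^2 + (-10751641920)*t^11 + 125572032*t^11*b^2 + 9600895008*t^12
      + 84449952*t^12*b^2 + (-7060265856)*t^13 + 266343552*t^13*b^2 + 2568342816*t^14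
      + 84449952*t^14*b^2 + 1912662720*t^15 + 125572032*t^15*b^2 + (-4517642160)*t^16
      + (-49225968)*t^16*b^2 + 5506201152*t^17 + (-90237888)*t^17*b^2 + (-5086717056)*t^18
      + (-103120128)*t^18*b^2 + 3864586464*t^19 + (-144501408)*t^19*b^2 + (-2094796080)*t^20
      + (-33300720)*t^20*b^2 + 693261504*t^21 + (-53607744)*t^21*b^2 + (-250997616)*t^22
      + 49233744*t^22*b^2 + (-69914016)*t^23 + 18265824*t^23*b^2 + 209742048*t^24
      + 43460064*t^24*b^2 + (-34012224)*t^25 + 11337408*t^25*b^2 + (-25509168)*t^26
      + 8503056*t^26*b^2)
    (17006112 + 22674816*t + 86920128*t^2 + 36531648*t^3 + 98467488*t^4 + (-107215488)*t^5
      + (-792195552)*t^6 + (-289002816)*t^7 + (-1496185344)*t^8 + 2829396096*t^9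
      + (-134283744)*t^10 + 4742064000*t^11 + (-3748711104)*t^12 + 283191552*t^13
      + (-5392329408)*t^14 + 1461462912*t^15 + 373997088*t^16 + 2755078272*t^17
      + 633816576*t^18 + (-384554304)*t^19 + (-639910368)*t^20 + (-537197184)*t^21
      + 17845920*t^22 + 36531648*t^23 + 86920128*t^24 + 22674816*t^25 + 17006112*t^26)
    0); [lra | lra | lra |].
  unfold surd_norm, T12_norm, T12_free, T12_surd, q; ring.
Qed.

Lemma T12_free_neg (t a b : R) :
  sqrt23_bounds a b -> 0 < t <= 543/1024 -> T12_free t a b < 0.
Proof.
  intros (? & ? & ?) Ht.
  destruct (Rle_lt_dec t (541/2048)); [|destruct (Rle_lt_dec t (1623/4096));
    [|destruct (Rle_lt_dec t (3787/8192)); [|destruct (Rle_lt_dec t (541/1024))]]].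
  - bernstein_pos T12_free 3791873376419769344180588156214039908128016854760461613966087114360005767200768 340066965714635635499320813072655821 (t^0*(1-t)^0)
      (((-73157594623779709215807923793422949920368754689) + 32514486499457648540359077241521311075719446528*(a*b))*((2048*t)^0*(541-2048*t)^13)
       + ((-925281634606880475869466494488820083400393097229) + 428414345715672929677120562989927769665330741248*(a*b))*((2048*t)^1*(541-2048*t)^12)
       + ((-5407297194588725215918984971621935825231535931470) + 2610136254943477664068463594410959448189635133440*(a*b))*((2048*t)^2*(541-2048*t)^11)
       + ((-19343343969089507908484140674228857237775851716894) + 9735006551173569807506336225669978309554511806464*(a*b))*((2048*t)^3*(541-2048*t)^10)
       + ((-47279191703439556592952980882231491559367225901771) + 24795947884763085313618601076507801840999884390400*(a*b))*((2048*t)^4*(541-2048*t)^9)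
       + ((-83408124703868938536809643289768510805043081905415) + 45541662601998361020582646357136789281385050275840*(a*b))*((2048*t)^5*(541-2048*t)^8)
       + ((-109292023049842377949120374567756055829104709076660) + 62044283670923515979684861668101857147632295608320*(a*b))*((2048*t)^6*(541-2048*t)^7)
       + ((-107716247053917780347060630855915413263715336718004) + 63474627761827477707941087483410677840739345367040*(a*b))*((2048*t)^7*(541-2048*t)^6)
       + ((-79862445022144081267753027560859463330511414363399) + 48758198689320492163458280707527119411320780226560*(a*b))*((2048*t)^8*(541-2048*t)^5)
       + ((-43997860628401175557197433053690386531597514965707) + 27770902045096428309844643583932571332308327464960*(a*b))*((2048*t)^9*(541-2048*t)^4)
       + ((-17510134695668834488885348070147202326551081255198) + 11398048401072276334177915418516410016934389612544*(a*b))*((2048*t)^10*(541-2048*t)^3)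
       + ((-4768450014568432461471652202792814734677748219982) + 3191813865304169573716589222016537553863457112064*(a*b))*((2048*t)^11*(541-2048*t)^2)
       + ((-796808063659036943992390518397719874970557384717) + 546498522749318053869346965668904350410041507840*(a*b))*((2048*t)^12*(541-2048*t)^1)
       + ((-61749319513676880945947923922489039446966044673) + 43200740147579080173282585934110929966587532052*(a*b))*((2048*t)^13*(541-2048*t)^0)).
  - bernstein_pos T12_free 31063026699630750467527378175705414927384714074197701541610185640837167244908691456 340066965714635635499320813072655821 (t^0*(1-t)^0)
      (((-505850425456041008709205392773030211149545837953025) + 353900463288967824779530943972236738286285062569984*(a*b))*((4096*t-1082)^0*(1623-4096*t)^13)
       + ((-6600357467645384347236673595717028509536740792336397) + 4662601084953665834552008236078784177303028704002048*(a*b))*((4096*t-1082)^1*(1623-4096*t)^12)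
       + ((-39795470379917870902888522002559395691536068055662670) + 28354123018095071060100042308980436532523848356511744*(a*b))*((4096*t-1082)^2*(1623-4096*t)^11)
       + ((-146813922566383991472956493028587971373849928135606558) + 105377589309927477962921533321118460230639577020571648*(a*b))*((4096*t-1082)^3*(1623-4096*t)^10)
       + ((-369791241456449188858306133002349707594996765802103499) + 267032040373547655949290923124412942113770635152537600*(a*b))*((4096*t-1082)^4*(1623-4096*t)^9)
       + ((-671601837240041334061062169653176312959465302575285511) + 487209402594357337689292532420671352615478990623204352*(a*b))*((4096*t-1082)^5*(1623-4096*t)^8)
       + ((-904939510030756897826429568663933226864714492066924212) + 658458742485634162597609987316516226015613695033329664*(a*b))*((4096*t-1082)^6*(1623-4096*t)^7)
       + ((-916082038193789473198593030019912081492295398855804596) + 667400187646372822490732737293847812280035179957824512*(a*b))*((4096*t-1082)^7*(1623-4096*t)^6)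
       + ((-696823769864689039586021604405241745191796835645064455) + 507314826858179509940532251831936053151878636410347904*(a*b))*((4096*t-1082)^8*(1623-4096*t)^5)
       + ((-393426538531534791528712195112034742625308050400543435) + 285624347187440122856259116124396252229930028756808000*(a*b))*((4096*t-1082)^9*(1623-4096*t)^4)
       + ((-160288487875751801651662796541588223491692154859192606) + 115769165405307247090188991989880767539136404945424576*(a*b))*((4096*t-1082)^10*(1623-4096*t)^3)
       + ((-44633414264720425140760034834586316688534625642676302) + 31988451560163434144024697989573789497652499088883232*(a*b))*((4096*t-1082)^11*(1623-4096*t)^2)
       + ((-7615139030182247158979196217611606358412183677734925) + 5400494131942857471902825225818595736286746223988616*(a*b))*((4096*t-1082)^12*(1623-4096*t)^1)
       + ((-601360799087687243676429982042481755307999542382593) + 420713352781602591893951233343922815947866897790332*(a*b))*((4096*t-1082)^13*(1623-4096*t)^0)).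
  - bernstein_pos T12_free 254468314723375107829984282015378759085135577695827571028870640769738074070292000407552 340066965714635635499320813072655821 (t^0*(1-t)^0)
      (((-4926347666126333900197314412892010539483132251198193665) + 3446483785986888432795248503553415708244925626698399744*(a*b))*((8192*t-3246)^0*(3787-8192*t)^13)
       + ((-64872170021837026690668843344057065875864774554362576909) + 45086009862306380234593373694338638174945537187161423872*(a*b))*((8192*t-3246)^1*(3787-8192*t)^12)
       + ((-394534277402042311635687052071712112664395145209444302926) + 272202621876030637394077195607118151243227540017369333760*(a*b))*((8192*t-3246)^2*(3787-8192*t)^11)
       + ((-1467320002034573630698668155976202408777201513526231826718) + 1004241645450817490900417824165458332957180920499638149120*(a*b))*((8192*t-3246)^3*(3787-8192*t)^10)
       + ((-3723364763226342287277599958713345990857526041135074509515) + 2525957934036512428993647973897129082609287037146096281600*(a*b))*((8192*t-3246)^4*(3787-8192*t)^9)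
       + ((-6807524859510262041648959211819247701816457054927919777031) + 4574229683354540467928160488753012083630751541535737566208*(a*b))*((8192*t-3246)^5*(3787-8192*t)^8)
       + ((-9226302220975958721216827503804364929469191553670281430708) + 6135437710546419921972279621174896027031930942645789579264*(a*b))*((8192*t-3246)^6*(3787-8192*t)^7)
       + ((-9385422821591743488265072166530924017409268152279819617972) + 6171658125250948768375698390399658841998925875732838415360*(a*b))*((8192*t-3246)^7*(3787-8192*t)^6)
       + ((-7165975819192095010244653802404130554400573724874829071623) + 4655697934578052780316479410512660608652076482737093368960*(a*b))*((8192*t-3246)^8*(3787-8192*t)^5)
       + ((-4056060042934044691566745673001828003923970288511915524811) + 2601340216593238534655105371390196113198896569493689640000*(a*b))*((8192*t-3246)^9*(3787-8192*t)^4)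
       + ((-1654299144157513776642045745084891044604926479197954965790) + 1046412616742242301988409043601721704849047168511962244672*(a*b))*((8192*t-3246)^10*(3787-8192*t)^3)
       + ((-460412155342316284599432277333259133832969425242244513870) + 286969672835382882993898972385128531321397697341842079136*(a*b))*((8192*t-3246)^11*(3787-8192*t)^2)
       + ((-78371833277233475447192561415190752594510262244351483917) + 48088970116879134207387985812580556387798258165000737560*(a*b))*((8192*t-3246)^12*(3787-8192*t)^1)
       + ((-6162354462534752894657609901009063494875129540640120833) + 3718918334889569208837330345744518315533703978967045900*(a*b))*((8192*t-3246)^13*(3787-8192*t)^0)).
  - bernstein_pos T12_free 254468314723375107829984282015378759085135577695827571028870640769738074070292000407552 340066965714635635499320813072655821 (t^0*(1-t)^0)
      (((-6162354462534752894657609901009063494875129540640120833) + 3718918334889569208837330345744518315533703978967045900*(a*b))*((8192*t-3787)^0*(4328-8192*t)^13)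
       + ((-81849382748670099813905296011044898272243105812291657741) + 48602906590249665222382603176776919816078045288142455840*(a*b))*((8192*t-3787)^1*(4328-8192*t)^12)
       + ((-502142748999555776999985092483508881965763548057526599758) + 293136910515829255173834380755484892460755142819542698496*(a*b))*((8192*t-3787)^2*(4328-8192*t)^11)
       + ((-1884071298463321589463239596145188491043988032607229051166) + 1080317225007424042946751925413297003784076721324969799680*(a*b))*((8192*t-3787)^3*(4328-8192*t)^10)
       + ((-4823659818560008098425080961428978370112134652710979896011) + 2714254250962022297640902549259549194106085763441409146880*(a*b))*((8192*t-3787)^4*(4328-8192*t)^9)
       + ((-8898790686467862985453060031096952571279824558929498604807) + 4909412471611307411752198298074859615922391930200637440000*(a*b))*((8192*t-3787)^5*(4328-8192*t)^8)
       + ((-12170131628448916187829570540265847035299095699429278090932) + 6576871428424737011870949095215496518915819204771231825920*(a*b))*((8192*t-3787)^6*(4328-8192*t)^7)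
       + ((-12492954899384103461254521513381925665744937209039685682868) + 6607121455307271323426641450497582845833247979089166336000*(a*b))*((8192*t-3787)^7*(4328-8192*t)^6)
       + ((-9625884621326850978863095553524371791370928139270463948039) + 4977433690034636325691864457357054314457619370644005191680*(a*b))*((8192*t-3787)^8*(4328-8192*t)^5)
       + ((-5498269170079750912469874054976220068519897791720484504267) + 2777160289794058001114024966769161952534793427670269952000*(a*b))*((8192*t-3787)^9*(4328-8192*t)^4)
       + ((-2263008201274728164022272052255166288562748473477739577630) + 1115480271388578306702262046373507037690496171218934169600*(a*b))*((8192*t-3787)^10*(4328-8192*t)^3)
       + ((-635557901131588497814113769332250392601057560253100458062) + 305436720775793511254120136580487839140494315031436984320*(a*b))*((8192*t-3787)^11*(4328-8192*t)^2)
       + ((-109164624597971501198443299673720964098563108171983880205) + 51100758621180256869201993795713107681410574536218247168*(a*b))*((8192*t-3787)^12*(4328-8192*t)^1)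
       + ((-8660659395267913964390848589020307442160492296322154497) + 3945159195769068433367744614260919712657003725549731840*(a*b))*((8192*t-3787)^13*(4328-8192*t)^0)).
  - bernstein_pos T12_free 11150372599265311570767859136324180752990208 8192 (t^0*(1-t)^0)
      (((-15753647667712200863008272042898729418376193) + 7176202772405428610668868012473321346364180*(a*b))*((1024*t-541)^0*(543-1024*t)^13)
       + ((-204981615592849726870856895275837363210769421) + 93300658890695758284797996565102242449033644*(a*b))*((1024*t-541)^1*(543-1024*t)^12)
       + ((-1230996641172289676792607338934607096987539534) + 559864010944767993294411036098473041418043736*(a*b))*((1024*t-541)^2*(543-1024*t)^11)
       + ((-4517719666711800110417360171117908451772438814) + 2053054626002443199135560293392602473553863816*(a*b))*((1024*t-541)^3*(543-1024*t)^10)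
       + ((-11304478750690655092235405104473417039113555659) + 5133185631744190523205535434612282926051290140*(a*b))*((1024*t-541)^4*(543-1024*t)^9)
       + ((-20366414377497757739063499333883792135799234823) + 9240721138665875957652887756046621928526543940*(a*b))*((1024*t-541)^5*(543-1024*t)^8)
       + ((-27179728565421745638634140966263800701560231604) + 12322275759039220011498371126517347162863583376*(a*b))*((1024*t-541)^6*(543-1024*t)^7)
       + ((-27204277248150827067427521885239727046722983604) + 12323588235556593139822077010089493290471914544*(a*b))*((1024*t-541)^7*(543-1024*t)^6)
       + ((-20421648958867374077160559378515647014651371783) + 9243674208515113521903502145156543311814364684*(a*b))*((1024*t-541)^8*(543-1024*t)^5)
       + ((-11355621965346240583692529808548343919371407051) + 5135919951391906877165879652058507865863823220*(a*b))*((1024*t-541)^9*(543-1024*t)^4)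
       + ((-4546359937275538243373124022914174856546818334) + 2054585841404283605617463005366274468114802840*(a*b))*((1024*t-541)^10*(543-1024*t)^3)
       + ((-1241039366341927974820807500088122702428952654) + 560400928947598993073087251997126174152252104*(a*b))*((1024*t-541)^11*(543-1024*t)^2)
       + ((-207027364280994955691154741100973897705001997) + 93410030647781371852902893586597648861964356*(a*b))*((1024*t-541)^12*(543-1024*t)^1)
       + ((-15939625734906682457424230091787716677108737) + 7186145612648530848564549200537905476869916*(a*b))*((1024*t-541)^13*(543-1024*t)^0)).
Qed.

Lemma T12_surd_nonpos (t a b : R) :
  sqrt23_bounds a b -> 0 < t <= 3787/8192 -> T12_surd t a b <= 0.
Proof.
  intros (? & ? & ?) Ht.
  destruct (Rle_lt_dec t (541/2048)); [|destruct (Rle_lt_dec t (1623/4096))].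
  - bernstein_nonneg T12_surd 2787867789254478399474315054508666704017558694891022528282624 (t^0*(1-t)^2)
      ((11355553229615668023596195472004349952*a)*((2048*t)^0*(541-2048*t)^10)
       + (112555637391009857905108188159113428992*a)*((2048*t)^1*(541-2048*t)^9)
       + (502441061843678932610993764142885634048*a)*((2048*t)^2*(541-2048*t)^8)
       + (1329990369047089704520928999098049101824*a + (-372124024369910057851932844568346624)*b)*((2048*t)^3*(541-2048*t)^7)
       + (2311573830942085275237784251743562891264*a + (-2768702071292594152764551777954562048)*b)*((2048*t)^4*(541-2048*t)^6)
       + (2755935965424994769133961763727247147008*a + (-8872623789922725356532957050503692288)*b)*((2048*t)^5*(541-2048*t)^5)
       + (2282200510661880910193797702254984167424*a + (-15871663859951545444709141472249643008)*b)*((2048*t)^6*(541-2048*t)^4)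
       + (1295948778045142279006360263033027035136*a + (-17112735439385854915253746931230310400)*b)*((2048*t)^7*(541-2048*t)^3)
       + (482846419700140012907037771162074480640*a + (-11118694052336098858418607273302556672)*b)*((2048*t)^8*(541-2048*t)^2)
       + (106562468955190312687852154129933279232*a + (-4030062533873382478871535145143238656)*b)*((2048*t)^9*(541-2048*t)^1)
       + (10575848748705393170134630138619250180*a + (-628485803971634352617871447938826240)*b)*((2048*t)^10*(541-2048*t)^0)).
  - bernstein_nonneg T12_surd 2854776616196585881061698615816874704913980103568407068961406976 (t^0*(1-t)^2)
      ((10829669118674322606217861261946112184320*a + (-643569463266953577080700362689358069760)*b)*((4096*t-1082)^0*(1623-4096*t)^10)
       + (107885052675057398997087616014665843798016*a + (-7590149931661131827028279446027032854528)*b)*((4096*t-1082)^1*(1623-4096*t)^9)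
       + (483552896290735565885326032843436099654656*a + (-40152001599044271293216024261032893480960)*b)*((4096*t-1082)^2*(1623-4096*t)^8)
       + (1284080038282499915665235194353247822368768*a + (-125477077210854386817832823286197599076352)*b)*((4096*t-1082)^3*(1623-4096*t)^7)
       + (2237189219920402236900807910568253044126208*a + (-256561716451469720351694150978766494498816)*b)*((4096*t-1082)^4*(1623-4096*t)^6)
       + (2671976210611833448695633384930122532297216*a + (-358691654594327028004457469162591898042368)*b)*((4096*t-1082)^5*(1623-4096*t)^5)
       + (2215427491285554442808608548702933469511808*a + (-347300021131587780565447897205538910371840)*b)*((4096*t-1082)^6*(1623-4096*t)^4)
       + (1259108997305283410829465200460668247188736*a + (-229988027261503480666425478584782548893696)*b)*((4096*t-1082)^7*(1623-4096*t)^3)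
       + (469412347948424785357916613685291163995344*a + (-99702103151907720561747274229682203000832)*b)*((4096*t-1082)^8*(1623-4096*t)^2)
       + (103656055281965433658745658295404897971952*a + (-25553052346932115422338181284342116909056)*b)*((4096*t-1082)^9*(1623-4096*t)^1)
       + (10294729599110933556179219939016214933668*a + (-2940549548001696388896184726231336353792)*b)*((4096*t-1082)^10*(1623-4096*t)^0)).
  - bernstein_nonneg T12_surd 2923291254985303942207179382596479697831915626054048838616480743424 (t^0*(1-t)^2)
      ((10541803109489595961527521217552604092076032*a + (-3011122737153737102229693159660888426283008)*b)*((8192*t-3246)^0*(3787-8192*t)^10)
       + (105055146337977637389635041216041753619501056*a + (-32083678255676813437208248577330162536808448)*b)*((8192*t-3246)^1*(3787-8192*t)^9)
       + (471056471801673258707038186242797047523374080*a + (-153777217721709476265362225581090885053972480)*b)*((8192*t-3246)^2*(3787-8192*t)^8)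
       + (1251475115932100563756494443864021648751538176*a + (-436614915008482907648201840613155101552410624)*b)*((8192*t-3246)^3*(3787-8192*t)^7)
       + (2181597909264449598602125064730225985707557376*a + (-813242018021604996185083711559176369156915200)*b)*((8192*t-3246)^4*(3787-8192*t)^6)
       + (2607358392424504597161370915824357444401788416*a + (-1038322925045672919540619442265573295103410176)*b)*((8192*t-3246)^5*(3787-8192*t)^5)
       + (2163669144048698086130772178353072284704236672*a + (-920308838475345459310748016491753121836433408)*b)*((8192*t-3246)^6*(3787-8192*t)^4)
       + (1230968281646566656535254852238301025493795584*a + (-559154386267222602055181724869213400638423040)*b)*((8192*t-3246)^7*(3787-8192*t)^3)
       + (459505618313576408875935327086712307398700368*a + (-222872121087524978753921592695374971100200960)*b)*((8192*t-3246)^8*(3787-8192*t)^2)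
       + (101626138288796179317384309570637732380289680*a + (-52625379960770874665602749534592758051766272)*b)*((8192*t-3246)^9*(3787-8192*t)^1)
       + (10112128092064948562010174215946141981749700*a + (-5589966494487469729468766372808482309013504)*b)*((8192*t-3246)^10*(3787-8192*t)^0)).
Qed.

Lemma T12_norm_neg (t a b : R) :
  sqrt23_bounds a b -> 3787/8192 <= t <= 541/1024 -> T12_norm t a b < 0.
Proof.
  intros (? & ? & ?) Ht.
  bernstein_pos T12_norm 14611009342813755605170940047444803708878041880587845396754925399181335001451894544485483551597095490655554694196882643237968835222228706767458124723265561593676562432 213762552995118611461930995289129199558623275270056869181300950693501 (t^0*(1-t)^0)
    ((10565088381516567966935123643014266348059831407336051560549345325796807499065165819342360944939427219382271 + (-4002980710609559978637581227587931504065197114452293763790893551534497923733782504364528840479417097947800)*(a*b))*((8192*t-3787)^0*(4328-8192*t)^25)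
     + (268657432764210732702033037889517740994654222221849460275152346646904693239789401763367247639067824376520679 + (-101858955050014329466453198199725198394585644928716648937528666420816428218058005752106087635105426983375680)*(a*b))*((8192*t-3787)^1*(4328-8192*t)^24)
     + (3278966407932367767395832398891903015150858970995066592876166900986529405589142701469422336659016955587985108 + (-1244453147683189158256107468380972622980794296077694332868093696887919911280873703866197818480075817825667072)*(a*b))*((8192*t-3787)^2*(4328-8192*t)^23)
     + (25566882984273810520278920361060220270181126209024486537358111962116211945168141744628080056103134960436639492 + (-9716353229056737657771378679375036434388612876340882051988678298239126824432096532693012007818815568633839616)*(a*b))*((8192*t-3787)^3*(4328-8192*t)^22)
     + (143007328539117956331902255045641521975393615126581589474342486563460876757917191312227220561671600571972308630 + (-54437957777851047357842576305125412888725401140976231693114543915094434254036115998513784399677369000945188864)*(a*b))*((8192*t-3787)^4*(4328-8192*t)^21)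
     + (610822733731775954815292682593688504363706123751892238303052923812777068413930142145068304771058581495670059126 + (-232971150540321232976006809463240734904783541168724736709191431865941280086776599457223239930491844837379670016)*(a*b))*((8192*t-3787)^5*(4328-8192*t)^20)
     + (2070606310211285072225187960944054339856057178655844005858100876676226787203550727712895950373679761379792079924 + (-791488368772035145743782756210686998922093239843901179261373224261323286799181611673877425218146155001267879936)*(a*b))*((8192*t-3787)^6*(4328-8192*t)^19)
     + (5715561237999041403483323347907084340568982063084572850377784741116861410320432831733753957209096431174849964612 + (-2190149258016485812965587970017801399202680026149023814166305987254188130402215877537635839879367316881910267904)*(a*b))*((8192*t-3787)^7*(4328-8192*t)^18)
     + (13078429555051839265972283037284096093691671506886363109173953273420489339762633880280963430341066782952016281369 + (-5025011851158663910105787297732633650047846971056601215025840742078276015513682401773937709758271847656719384576)*(a*b))*((8192*t-3787)^8*(4328-8192*t)^17)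
     + (25124119396384624940519990577145838528669573259617740755911796146204942067928287339068246453144999418960334082977 + (-9681191621536975615880960857570252348560583380763359192136259485263723666342521509024485665651385550167921917952)*(a*b))*((8192*t-3787)^9*(4328-8192*t)^16)
     + (40884676616151341050532141830235761861697580916884558529218793462028934162275818886325875964669240098171944574824 + (-15802860867107570851025766730946953801859845835175368049501560457040139169706006995706071614234549910376135262208)*(a*b))*((8192*t-3787)^10*(4328-8192*t)^15)
     + (56706919071504247360449730186269640135709775550798197115653425208610080280619282984217223214627443550528397376584 + (-21989730400167331498700885929175056967072666876935888610923977236937345666750098636078588688465081305995054940160)*(a*b))*((8192*t-3787)^11*(4328-8192*t)^14)
     + (67296617561854412072402159379462414702567671562549608879462644860239683449755587119844804151812827752856980334164 + (-26184726937386197504815172821053206697933799131331579897532171664164395381985287550330108506161566535027951403008)*(a*b))*((8192*t-3787)^12*(4328-8192*t)^13)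
     + (68461033422117531777432860176671589999648779342429677354587245859764169071576425664836475806675327077029747140180 + (-26731427017735913945653054347479280170215277340242325637780421401003559924086532445501520474825323848441329090560)*(a*b))*((8192*t-3787)^13*(4328-8192*t)^12)
     + (59702574941795152028299613313584041197424313858183265504474113123885579876588000627915059308369942141877712845896 + (-23395867199848795987160905661933516908887118648898750491292701976165069013442488837204879252862279759477799387136)*(a*b))*((8192*t-3787)^14*(4328-8192*t)^11)
     + (44549565862130958103502907519873115224457205127395199945600483198824920680717808042003524110656853763849622265704 + (-17522295207680648547045329911584752379142476379941031394870612422603208056999261636306430176074577183671821795328)*(a*b))*((8192*t-3787)^15*(4328-8192*t)^10)
     + (28335540179850694264558705121715066262620966277907846496285157133775824036733838228443973127159595251965213332385 + (-11186776269086441456992312814164413752974451672397725837187365339377621085885022138288198838694335440104517009408)*(a*b))*((8192*t-3787)^16*(4328-8192*t)^9)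
     + (15268576876144764621197417186897628361055845023774650688257548063440626624309427195502060399544631342088756100889 + (-6050801132293070772780331995713483922440272713643930726816273520428104848618004705245577821539509231558089244672)*(a*b))*((8192*t-3787)^17*(4328-8192*t)^8)
     + (6908145472242627827327907138254290389917701776804325202380534689800371583425832799875753833266489968397605448260 + (-2748033050549937688269890931079679194170200135080544429531250117208402969462849734481408425781390687361027801088)*(a*b))*((8192*t-3787)^18*(4328-8192*t)^7)
     + (2591372281631979502274899138178804438170946817938073809336881625898485486616351117693960749170831169791148772404 + (-1034741988037026100936464325451162307414647725129256693014317126018972193467218309567684320284116394956990447616)*(a*b))*((8192*t-3787)^19*(4328-8192*t)^6)
     + (791698727757829104802939320789305657370768919942513209787188316423018005683296304525661373487148582000043962486 + (-317314508595582883307627240326053886981770642443164478306536182671124890855270643976092857806711320266957389824)*(a*b))*((8192*t-3787)^20*(4328-8192*t)^5)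
     + (192004348462324588070805954045886983162341791494436991644617719504420804517558174359548093774070614521727143574 + (-77240484083316400238593779245730479273344676522401325242029060810033068737659511546813833878806098203797094400)*(a*b))*((8192*t-3787)^21*(4328-8192*t)^4)
     + (35566968553253204167929598866686544309656484994580844398200080878313635609008913434685849979030805396020262660 + (-14359893236859117226560965195037104642308147143289388020133854243450094519397521315577284321954250750884315136)*(a*b))*((8192*t-3787)^22*(4328-8192*t)^3)
     + (4727628642841808368802457998119252505571236847915230805238430299679916003197024133967622419791987135121194708 + (-1915468136874610019614027067982475199639510709634323278327273995545050057031796579951266954648773716843954176)*(a*b))*((8192*t-3787)^23*(4328-8192*t)^2)
     + (401583940192990150954101660998003758242806566879036127556740834404140757957090638621614863096803771902066663 + (-163260906839417455770157409288727172080775732395335911344669282245976785996376332913268579966324525636780032)*(a*b))*((8192*t-3787)^24*(4328-8192*t)^1)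
     + (16378276930639738075644384545986147621705741165492809314578986891693105421531337590430283547366363823603711 + (-6680143097518995586912759886760154927404702718385815068546708707932688123819544782152837151300058360053760)*(a*b))*((8192*t-3787)^25*(4328-8192*t)^0)).
Qed.

Lemma T12_surd_pos (t a b : R) :
  sqrt23_bounds a b -> 541/1024 <= t <= 4825/8192 -> 0 < T12_surd t a b.
Proof.
  intros (? & ? & ?) Ht.
  destruct (Rle_lt_dec t (543/1024)).
  - bernstein_pos T12_surd 1298074214633706907132624082305024 1024 (t^0*(1-t)^2)
      (((-1) + (-8860863626970890464708508368057860)*a + 9099368931179247592681657658769408*b)*((1024*t-541)^0*(543-1024*t)^10)
       + ((-10) + (-88589352893730577805402720510158008)*a + 91137191874405662034883517519757312*b)*((1024*t-541)^1*(543-1024*t)^9)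
       + ((-45) + (-398565221934263126226777603820331028)*a + 410764072415492467714762264025235456*b)*((1024*t-541)^2*(543-1024*t)^8)
       + ((-120) + (-1062608706311583505923104520734960544)*a + 1097097947057481311469290662083428352*b)*((1024*t-541)^3*(543-1024*t)^7)
       + ((-210) + (-1859159011431259646362001937299568840)*a + 1922948243678921655105680171927076864*b)*((1024*t-541)^4*(543-1024*t)^6)
       + ((-252) + (-2230502833749652898715128459747316816)*a + 2311175423616069279402784616456650752*b)*((1024*t-541)^5*(543-1024*t)^5)
       + ((-210) + (-1858345285732539482913345580822489224)*a + 1929015241451366164800636922374389760*b)*((1024*t-541)^6*(543-1024*t)^4)
       + ((-120) + (-1061678733635272553259080176920168864)*a + 1104031665770371358087500808199340032*b)*((1024*t-541)^7*(543-1024*t)^3)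
       + ((-45) + (-398042111882711874136477233686680116)*a + 414664295728641189328218414693482496*b)*((1024*t-541)^8*(543-1024*t)^2)
       + ((-10) + (-88434357148211577496415381115062712)*a + 92292816308528576262568440093474816*b)*((1024*t-541)^9*(543-1024*t)^1)
       + ((-1) + (-8841489130706093095820395033525860)*a + 9243822421255462715048613673697280*b)*((1024*t-541)^10*(543-1024*t)^0)).
  - bernstein_pos T12_surd 902298426593341756354872767060799347397725657845940630860305793024 662904189510194816788612801 (t^0*(1-t)^2)
      (((-1) + (-9493476666080534808619997739698598067568640)*a + 9925478747330936905620290694667058251038720*b)*((8192*t-4344)^0*(4825-8192*t)^10)
       + ((-10) + (-94306421696835239562602254190840405129428992)*a + 103948462075353643074984269569958437617401856*b)*((8192*t-4344)^1*(4825-8192*t)^9)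
       + ((-45) + (-421462486484000569470427653894158975426887680)*a + 489819167776521244580361012247051617322401792*b)*((8192*t-4344)^2*(4825-8192*t)^8)
       + ((-120) + (-1115879362540869020297144293529321041513414656)*a + 1367568330857219481700091839296790269064642560*b)*((8192*t-4344)^3*(4825-8192*t)^7)
       + ((-210) + (-1938315301269212734410291612690558446683029504)*a + 2505368882475125089557871442232431627068243968*b)*((8192*t-4344)^4*(4825-8192*t)^6)
       + ((-252) + (-2308071476868574924139680310329958910594121728)*a + 3146866475931060207657280812133171399992803328*b)*((8192*t-4344)^5*(4825-8192*t)^5)
       + ((-210) + (-1908010540260366964166992666615694779606401024)*a + 2744504671520062927340662947972290009238601728*b)*((8192*t-4344)^6*(4825-8192*t)^4)
       + ((-120) + (-1081232749666611594154647466991098129684905984)*a + 1641100027250248738417996677155042985523544064*b)*((8192*t-4344)^7*(4825-8192*t)^3)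
       + ((-45) + (-401961980016522541760600827175695705850750208)*a + 643899916156944435987391116767383955020185600*b)*((8192*t-4344)^8*(4825-8192*t)^2)
       + ((-10) + (-88523620822540942044601081868313791877450432)*a + 149693006845604031267858290403457451950080000*b)*((8192*t-4344)^9*(4825-8192*t)^1)
       + ((-1) + (-8769846899250308610359260521811528759612452)*a + 15658186283501467746305078644596277248000000*b)*((8192*t-4344)^10*(4825-8192*t)^0)).
Qed.

Lemma T12_norm_pos (t a b : R) :
  sqrt23_bounds a b -> 543/1024 <= t <= 4825/8192 -> 0 < T12_norm t a b.
Proof.
  intros (? & ? & ?) Ht.
  bernstein_pos T12_norm 773348949873933640331584917704572062047009005465098832654286128547270516727046614960361732745838189255307427955425497077449633532354189083880129584156398206354194432 11314279664221366419737473549541091847936892664609463441449438732001 (t^0*(1-t)^0)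
    (((-16613863788618838998593488909081720748890095420554611739421957425193423627486130431084836252732922185908225) + 6791929782372514563096350079296960176551753820441809582189435115697271988743622252937824894396305311268864*(a*b))*((8192*t-4344)^0*(4825-8192*t)^25)
     + ((-422512506143197883442153367960164091467786215309780908209430344977279014513561249049397442498548795822833689) + 173191982176462886382730368545901689557968905214599445835571225557264971963972429480647697807332286664802304*(a*b))*((8192*t-4344)^1*(4825-8192*t)^24)
     + ((-5158686297592418628287856938440157983010275487313477476547223584761627915332466134353051865728191085372506412) + 2120029740228061842777695985595804312202997248717177315885013804642504662787349210325802647470730569769287680*(a*b))*((8192*t-4344)^2*(4825-8192*t)^23)
     + ((-40249208855978406069602563321094675473083858485596482138296576891833671811431096958409104261378289189542430972) + 16581271408272279787431994162648794145981130024472401865285474978556902741128714407483905393523538929398054912*(a*b))*((8192*t-4344)^3*(4825-8192*t)^22)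
     + ((-225335151983121710673738805519648558920508139283294108273663289920117295771277569845138221254296593956985647466) + 93043110456371805405302869004088532365114694202993706217985197590994634094644676803297895411255363192339038208*(a*b))*((8192*t-4344)^4*(4825-8192*t)^21)
     + ((-963581120676385027759508748736423387826971990906977126542643924825015585419800802363498675202785407643877953418) + 398721518940172414542218421471217886178367837699533578360298767146705349249735312611099169777378392056187060224*(a*b))*((8192*t-4344)^5*(4825-8192*t)^20)
     + ((-3271011261544804294742266721604426448518267012539481705133792301495465045822861267142488600674344000531518895052) + 1356173047525130774733814451822413085068157033465600061460806002599400242431489944172114166385364153781482160128*(a*b))*((8192*t-4344)^6*(4825-8192*t)^19)
     + ((-9044016671813220097708541782420546707031493698554757982328668118918176419342440019677837501660233916855752283580) + 3756349202056645436725580072396015237627162694194680359677380088328341958755690407964347192369974048151861985280*(a*b))*((8192*t-4344)^7*(4825-8192*t)^18)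
     + ((-20733856349942429663327634942550312445776114298641125806687670277427522046420466664663458910317290260364434374887) + 8625225444103632345943368883665450441853154291883836890459381105830947336761393013131742844414958043388161556480*(a*b))*((8192*t-4344)^8*(4825-8192*t)^17)
     + ((-39915246881636904020799092413195112459592038956688370744089404688856953539099649688486043155447716438892364115039) + 16627372962029773425742381153454593947065147996850756169215304371289249010495523682425223959536288497641870852096*(a*b))*((8192*t-4344)^9*(4825-8192*t)^16)
     + ((-65107468971325884080285965734879532398040488495766570067566364946212351512292225273973530996173239115691584512152) + 27152717579503388260923080236853460857370634734891608677398450956263330294947295389775135086881231408614481068032*(a*b))*((8192*t-4344)^10*(4825-8192*t)^15)
     + ((-90536683765891237131166743655748702476931633134666845678220819932987483111030468933189373110563793634412550423480) + 37792237124373671365906730148120913033177224958964165435476377364689891555298466538523289320133911123523958472704*(a*b))*((8192*t-4344)^11*(4825-8192*t)^14)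
     + ((-107744017910675990969864626493569465316046059910746951286698785653934622641765255509257877854613023836857219111340) + 45004848737613181659217555615051090315533111267828981668606769276340338537279605219461970695113555061486418657280*(a*b))*((8192*t-4344)^12*(4825-8192*t)^13)
     + ((-109937252225214335732667282099093557223821511195634374231125775394597907180011591540610686760963813611087405734316) + 45939533156004920012502520530770757199314579105780659913088541333898541735971794491637650658596881893826496561152*(a*b))*((8192*t-4344)^13*(4825-8192*t)^12)
     + ((-96179592825614354571025100986756240484199281580968324401569407423034330706761509452951733377700222081190854919096) + 40195977493780879010547039488484487942551293346286092999742504471363460524347191325190630835081177803929063260160*(a*b))*((8192*t-4344)^14*(4825-8192*t)^11)
     + ((-72012095920760242560977217078773899657442965705315455288330763488678980927675394303858273545591919395274834960536) + 30091272847332116768650390388260236463910540799083606641792404494660449787219792016734614260961222204141086965760*(a*b))*((8192*t-4344)^15*(4825-8192*t)^10)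
     + ((-45966961915984295271744989639260263596072520376148923558443821354446770718436038232881441260846619827947492551775) + 19199461955871233141289451776413605281521903689964712344374021741396505942372396060648905689459023580523822841856*(a*b))*((8192*t-4344)^16*(4825-8192*t)^9)
     + ((-24862330619883653027051002761682670880833138640383655503072796870795678403048664240535361246396997904144463331559) + 10376748760098998863228030311426727791195821857318489043003167868101400906842045400528198024120277323187990036480*(a*b))*((8192*t-4344)^17*(4825-8192*t)^8)
     + ((-11292929852757188568647642707838895444962018593917690283549945494262787794092516635563416760584554802102512604604) + 4708318762330968407328057041112359602213226883043423626186521291169946084575190228960325643404592510803116032000*(a*b))*((8192*t-4344)^18*(4825-8192*t)^7)
     + ((-4253494305725499474804886313243133132794276282245969104517831284931575598506896380211936231763357836397867348940) + 1770940830451740120548398466200049153977553288395044176658273535027712307822837968594197275572695421515141742592*(a*b))*((8192*t-4344)^19*(4825-8192*t)^6)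
     + ((-1305004000771540190394846576419186098535473300024755022092389202176453890179265028850241743450255687382154137482) + 542405416816125890989960132686582431907034238455638996537763592151446774834700585932489973291938084240884236288*(a*b))*((8192*t-4344)^20*(4825-8192*t)^5)
     + ((-317877329939570131310707667523175385376547177775964401803295528192842813765594772115192835581163306382260187498) + 131848954875628909843111983533215364684683248508416116017275509799184912135311308360912407885106880239079063552*(a*b))*((8192*t-4344)^21*(4825-8192*t)^4)
     + ((-59149123573097323486474115603275485870919305967183854998078958610421594123832891500434478461008618363530774780) + 24474708465907200537196801210951548023243338921149924817730600067338075193097690833677291500176236491766906880*(a*b))*((8192*t-4344)^22*(4825-8192*t)^3)
     + ((-7898591207207163235802714333650844153146774003762556316977221834882503728515884733458543853760597940698087724) + 3259225108009403011038775669665801064547191404439401897081615213003616612458805069575222885973324523324921856*(a*b))*((8192*t-4344)^23*(4825-8192*t)^2)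
     + ((-674115954281141804252544744959436056163408679251414069099599890552373510324165013300085462748214879382413337) + 277290345309233223341151064817054151487845405777509444984098690928082597389492649543820288241630496841925568*(a*b))*((8192*t-4344)^24*(4825-8192*t)^1)
     + ((-27626177992852030995767733627957333298387389246661775822685097275408059571419918726317510165076257788665857) + 11323820012701121294263870395620232499627353285825661122135351999475531100073675576322749526867980878448264*(a*b))*((8192*t-4344)^25*(4825-8192*t)^0)).
Qed.

Lemma T12_free_pos (t a b : R) :
  sqrt23_bounds a b -> 4825/8192 <= t < 1 -> 0 < T12_free t a b.
Proof.
  intros (? & ? & ?) Ht.
  destruct (Rle_lt_dec t (2653/4096)); [|destruct (Rle_lt_dec t (1567/2048))].
  - bernstein_pos T12_free 55202056857816939206919576540039463000342040637751181798634284760564473000675080404992 73771054747037996026381548447289441 (t^0*(1-t)^0)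
      ((12930327777369153731082825024562785881944853788441976831 + (-4065111197735317427834127644262035159301625845054759492)*(a*b))*((8192*t-4825)^0*(5306-8192*t)^13)
       + (173513230644153854872541940261098710057188642771466395635 + (-52903663535902585910824273347406986492932553173143710600)*(a*b))*((8192*t-4825)^1*(5306-8192*t)^12)
       + (1075052179741976349552633009806477494617096693205569109938 + (-317698767345121388216541107347963559418003982499558186976)*(a*b))*((8192*t-4825)^2*(5306-8192*t)^11)
       + (4072003342596670883811906706211333297517904721699714432738 + (-1165656727562186898321826420471938753305499310523634616512)*(a*b))*((8192*t-4825)^3*(5306-8192*t)^10)
       + (10519912777439666294365601580051802856465388652873179069749 + (-2915386108697616454153869403340559538836059220134993269440)*(a*b))*((8192*t-4825)^4*(5306-8192*t)^9)
       + (19574958439604760141522775787291649459415153278727938243321 + (-5248703554200675432456040363912386478102818295544129470848)*(a*b))*((8192*t-4825)^5*(5306-8192*t)^8)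
       + (26990025607026263794258009283417429949056508830601374071116 + (-6997913318952877115920604607718814055981398268470254801920)*(a*b))*((8192*t-4825)^6*(5306-8192*t)^7)
       + (27919638694919517212508565064614497938590876099975839742284 + (-6995790280140100378669582112713509637792672446165825275904)*(a*b))*((8192*t-4825)^7*(5306-8192*t)^6)
       + (21667839196837950193804948595786704798888393778003781352185 + (-5243879563405218353020222733277564000198522326956208053248)*(a*b))*((8192*t-4825)^8*(5306-8192*t)^5)
       + (12460083552899474162105850843366073268027251307540297809205 + (-2910832172070322608682168609624203400104335459706872739840)*(a*b))*((8192*t-4825)^9*(5306-8192*t)^4)
       + (5160447660184874552950238492277402438392979958236060843746 + (-1163033269182218223299699910000810648773349118576340557824)*(a*b))*((8192*t-4825)^10*(5306-8192*t)^3)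
       + (1457626447269914911747637602973777121267340265677507264434 + (-316744644318148687742839911279870154141504885694545182720)*(a*b))*((8192*t-4825)^11*(5306-8192*t)^2)
       + (251677537036709303430164176544056589942319992993394720755 + (-52700607527964855750058087544679092671688939470122074112)*(a*b))*((8192*t-4825)^12*(5306-8192*t)^1)
       + (20061578110318475523400018190007118368918443309037256703 + (-4045704481415116220664681167700317511489126416676716544)*(a*b))*((8192*t-4825)^13*(5306-8192*t)^0)).
  - bernstein_pos T12_free 6738532331276481836782174870610286010783940507537986059403599213936092895590219776 73771054747037996026381548447289441 (t^0*(1-t)^0)
      ((2448923109169735781665041282959853316518364661747711 + (-493860410328993679280356587854042664976700002035732)*(a*b))*((4096*t-2653)^0*(3134-4096*t)^13)
       + (34063290067016838202181684121357963440329504768757747 + (-6394196743073708631079881646844994824792242591570776)*(a*b))*((4096*t-2653)^1*(3134-4096*t)^12)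
       + (218866083481464797051457821058109265649788668228730802 + (-38161545558170986800998965042505961580784014335503712)*(a*b))*((4096*t-2653)^2*(3134-4096*t)^11)
       + (860071035939744561004169236232311974298967646456938210 + (-138993549658588845283316526225520615996634040788796480)*(a*b))*((4096*t-2653)^3*(3134-4096*t)^10)
       + (2306081574638818888344783369901032593335532771828366645 + (-344663514192036070180013853089828080380054698360533440)*(a*b))*((4096*t-2653)^4*(3134-4096*t)^9)
       + (4454884854741201075546673703126435199386605764273437433 + (-614388361716068250752470136399172745675164988894775424)*(a*b))*((4096*t-2653)^5*(3134-4096*t)^8)
       + (6378633418471847344425785867309043226586851625215719756 + (-809875808672286311171818169508280323362378774736479232)*(a*b))*((4096*t-2653)^6*(3134-4096*t)^7)
       + (6853595395207824761618461585372042040660066634933729612 + (-799207042515569469665415281607327332258387905230280704)*(a*b))*((4096*t-2653)^7*(3134-4096*t)^6)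
       + (5525676230058512950996766816786395452058840495467526905 + (-590341682286908882491265256102058732906246660134865920)*(a*b))*((4096*t-2653)^8*(3134-4096*t)^5)
       + (3301499883053278583625519849690553208785813028566203701 + (-322320957004663953317548626651353613034309370545367040)*(a*b))*((4096*t-2653)^9*(3134-4096*t)^4)
       + (1420827428978083316970487310059059021097422275123085026 + (-126417763969219601270933633704707976066511263742189568)*(a*b))*((4096*t-2653)^10*(3134-4096*t)^3)
       + (417053735519476493347890711148002636939614874173964210 + (-33722498022952554452884586589319532009251239854751744)*(a*b))*((4096*t-2653)^11*(3134-4096*t)^2)
       + (74833595635840840691393152403832499950544016520511475 + (-5482652138623549516737035744401944544541379883450368)*(a*b))*((4096*t-2653)^12*(3134-4096*t)^1)
       + (6199059845195560917442609109728888484100763872657407 + (-410221566657828124727873022894640635548975585525760)*(a*b))*((4096*t-2653)^13*(3134-4096*t)^0)).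
  - bernstein_pos T12_free 822574747470273661716574080885044679050773987736570563892040919669933214793728 73771054747037996026381548447289441 (t^0*(1-t)^0)
      ((756721172509223744805005994839952207531831527423 + (-50075874836160659756820437365068436956662058780)*(a*b))*((2048*t-1567)^0*(2048-2048*t)^13)
       + (11242204918328270800473077450166217160503144286195 + (-614420998829125711781369189952038048990147469312)*(a*b))*((2048*t-1567)^1*(2048-2048*t)^12)
       + (77140633254962061481441341131073030658938787332018 + (-3431955310633544453788895853561504758960750592000)*(a*b))*((2048*t-1567)^2*(2048-2048*t)^11)
       + (323645283931571441561821030351238139676463890169570 + (-11519509805047891952921555004323643247449184665600)*(a*b))*((2048*t-1567)^3*(2048-2048*t)^10)
       + (926177524827592921612918369914353584211662196440373 + (-25816976446328655950557722362356951851932319744000)*(a*b))*((2048*t-1567)^4*(2048-2048*t)^9)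
       + (1908831566583618165095672524121610841053409226783481 + (-40564829527605668263637578862301428543856857579520)*(a*b))*((2048*t-1567)^5*(2048-2048*t)^8)
       + (2914591527040540050824984187040156880612301018757452 + (-45597936940799084360375996612371170403669141094400)*(a*b))*((2048*t-1567)^6*(2048-2048*t)^7)
       + (3337970133914088206864507649466300766074933969156428 + (-36668762614817745815216696142637823041463836999680)*(a*b))*((2048*t-1567)^7*(2048-2048*t)^6)
       + (2867163763446072907811545285957004413562895948839673 + (-20674402808037549863858838828601027544766165811200)*(a*b))*((2048*t-1567)^8*(2048-2048*t)^5)
       + (1824192304883839612641775182647463317983476710374709 + (-7783409643297069338828315327367493449023194398720)*(a*b))*((2048*t-1567)^9*(2048-2048*t)^4)
       + (835578873597235010375341843744881505533816943410914 + (-1760974679016511240224563604029023872419113205760)*(a*b))*((2048*t-1567)^10*(2048-2048*t)^3)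
       + (260933293579367533562834350434611598359672295260082 + (-181389470269121841819685968115249133193227403264)*(a*b))*((2048*t-1567)^11*(2048-2048*t)^2)
       + (49790249383893763430658835187230362580280307351539)*((2048*t-1567)^12*(2048-2048*t)^1)
       + (4384504911992708754611054498148849058967797628927)*((2048*t-1567)^13*(2048-2048*t)^0)).
Qed.

Lemma T12_surd_nonneg (t a b : R) :
  sqrt23_bounds a b -> 4825/8192 <= t < 1 -> 0 <= T12_surd t a b.
Proof.
  intros (? & ? & ?) Ht.
  destruct (Rle_lt_dec t (2653/4096)); [|destruct (Rle_lt_dec t (1567/2048))].
  - bernstein_nonneg T12_surd 902298426593341756354872767060799347397725657845940630860305793024 (t^0*(1-t)^2)
      (((-8769846899250308610359260521811528759612452)*a + 15658186283501467746305078644596277248000000*b)*((8192*t-4825)^0*(5306-8192*t)^10)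
       + ((-86873317162465230162584128567916783314798608)*a + 163470718824425323658243282488468093009920000*b)*((8192*t-4825)^1*(5306-8192*t)^9)
       + ((-387109247075841134822448247472122628786883792)*a + 767899323966336067500856045532479724558745600*b)*((8192*t-4825)^2*(5306-8192*t)^8)
       + ((-1021810555432149685537300079721914742802189056)*a + 2137364477655290771261542871837653372067905536*b)*((8192*t-4825)^3*(5306-8192*t)^7)
       + ((-1769306195511853200024409110198108509952888960)*a + 3903700211913380035660807640468775016996012032*b)*((8192*t-4825)^4*(5306-8192*t)^6)
       + ((-2099896898974502917644310837885375264861423104)*a + 4888462121018017085872014730952866372446584832*b)*((8192*t-4825)^5*(5306-8192*t)^5)
       + ((-1729983829498551151001583505710108037503644160)*a + 4250702928860692640599451451929631807869288448*b)*((8192*t-4825)^6*(5306-8192*t)^4)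
       + ((-976861621339088087853729128109843720680878080)*a + 2534242140631849565544299701141740574583291904*b)*((8192*t-4825)^7*(5306-8192*t)^3)
       + ((-361816997442267355328856201569289780477023232)*a + 991427334837301880599985138320895705754894336*b)*((8192*t-4825)^8*(5306-8192*t)^2)
       + ((-79375830172347680622578671928989585073639424)*a + 229819271170860317284558674429429286365560832*b)*((8192*t-4825)^9*(5306-8192*t)^1)
       + ((-7832106652792385061463132470685366847803392)*a + 23970743439230971513253905953779166046322688*b)*((8192*t-4825)^10*(5306-8192*t)^0)).
  - bernstein_nonneg T12_surd 881150807220060308940305436582811862693091462740176397324517376 (t^0*(1-t)^2)
      (((-7648541653117563536585090303403678562308)*a + 23408929139873995618412017532987466842112*b)*((4096*t-2653)^0*(3134-4096*t)^10)
       + ((-74425331288160342381578740490802573522288)*a + 253402110190633311355956864994644930330624*b)*((4096*t-2653)^1*(3134-4096*t)^9)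
       + ((-325172221526572868739008957753217872355408)*a + 1234003700206341652247660200561487898476544*b)*((4096*t-2653)^2*(3134-4096*t)^8)
       + ((-839869518663078090283136836726959589367040)*a + 3559968792692427847453915946920296465825792*b)*((4096*t-2653)^3*(3134-4096*t)^7)
       + ((-1419815245161039472223555866419350032829568)*a + 6737746701090895625610044851969663369740288*b)*((4096*t-2653)^4*(3134-4096*t)^6)
       + ((-1641121784144579173439938263196979248040448)*a + 8741740434663222347334997788884897561051136*b)*((4096*t-2653)^5*(3134-4096*t)^5)
       + ((-1313156670985374643694523414279736859042304)*a + 7873941835151563455178150283698300910567424*b)*((4096*t-2653)^6*(3134-4096*t)^4)
       + ((-718022242918834734073806700171765700677632)*a + 4861890744075253780702959755491064753946624*b)*((4096*t-2653)^7*(3134-4096*t)^3)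
       + ((-256681112420111671523853014585580647101440)*a + 1969540248166256183398283223294500401053696*b)*((4096*t-2653)^8*(3134-4096*t)^2)
       + ((-54153306922354264689982495934749184323584)*a + 472671990429045302169946848730400818200576*b)*((4096*t-2653)^9*(3134-4096*t)^1)
       + ((-5118392192723413767528421265722800967680)*a + 51032658295651676965226627964364482674688*b)*((4096*t-2653)^10*(3134-4096*t)^0)).
  - bernstein_nonneg T12_surd 860498835175840145449517027912902209661222131582203513012224 (t^0*(1-t)^2)
      (((-4998429875706458757351973892307422820)*a + 49836580366847340786354128871449690112*b)*((2048*t-1567)^0*(2048-2048*t)^10)
       + ((-44184718688470589497937154396665683968)*a + 571909929698691117789946427216926605312*b)*((2048*t-1567)^1*(2048-2048*t)^9)
       + ((-171283900318651336606804580550391627776)*a + 2951269647690925378254675182914036039680*b)*((2048*t-1567)^2*(2048-2048*t)^8)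
       + ((-380328777068691095100452474673847861248)*a + 9018653272703750900215066425375697403904*b)*((2048*t-1567)^3*(2048-2048*t)^7)
       + ((-529084221973288498686066281061512380416)*a + 18073597199466940943211611845968827252736*b)*((2048*t-1567)^4*(2048-2048*t)^6)
       + ((-472191591049169831113005910003889995776)*a + 24819692614271702632999853890941814308864*b)*((2048*t-1567)^5*(2048-2048*t)^5)
       + ((-264023376759311552220109347795807240192)*a + 23653515555582438270913616861514940022784*b)*((2048*t-1567)^6*(2048-2048*t)^4)
       + ((-84562879063633550940875547857129570304)*a + 15447274117476222849032192733185008730112*b)*((2048*t-1567)^7*(2048-2048*t)^3)
       + ((-11878038876035836993666989387109367808)*a + 6615977176024195215713095962176985759744*b)*((2048*t-1567)^8*(2048-2048*t)^2)
       + (1678075056374007534540442721407161335808*b)*((2048*t-1567)^9*(2048-2048*t)^1)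
       + (191408831393027885698148216680369618944*b)*((2048*t-1567)^10*(2048-2048*t)^0)).
Qed.

Lemma T12_norm_deriv_pos (t a b : R) :
  sqrt23_bounds a b -> 541/1024 <= t <= 543/1024 -> 0 < T12_norm_deriv t a b.
Proof.
  intros (? & ? & ?) Ht.
  bernstein_pos T12_norm_deriv 29642774844752946028434172162224104410437116074403984394101141506025761187823616 16777216 (t^0*(1-t)^0)
    (((-3081643279117007577793720223992478865292976058170387417009268543903438758906683393) + 1464956242004676335288055865462480766548846071850022263386981330051750569943786888*(a*b))*((1024*t-541)^0*(543-1024*t)^24)
     + ((-74031145283446005997997757209685246327481183864315089150620981663576928796189409304) + 35187874130272224630365976613793382877327842571238646359187188334892211889577032768*(a*b))*((1024*t-541)^1*(543-1024*t)^23)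
     + ((-852184192999965857172499598009675558943213288471772809158626730773974483241285042452) + 404993380172945168430986714487488112489161281380489700095219639495092485064102656416*(a*b))*((1024*t-541)^2*(543-1024*t)^22)
     + ((-6255418502224472815564885530963116387163479517642899498435979299806403642472441792488) + 2972393642916209412582809061241519327045620595216579851311303774465057253023044466112*(a*b))*((1024*t-541)^3*(543-1024*t)^21)
     + ((-32872856776935322817176949951247505755728180658543821562483429327578267771122429536642) + 15617895738455302349780016012137786818556156463566451519436836894953442141222108070416*(a*b))*((1024*t-541)^4*(543-1024*t)^20)
     + ((-131619281742190255760830293499946266041133040742711990453302217392312240923937383015944) + 62522929909643798500033353559627755945404724926614557630131185508985943258398577095360*(a*b))*((1024*t-541)^5*(543-1024*t)^19)
     + ((-417199950494344031135609712080249609790566779539520255664524673729059133448774252711364) + 198151973350858007069786547850447863754142865742033514300474762664973299300376546271520*(a*b))*((1024*t-541)^6*(543-1024*t)^18)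
     + ((-1073844501885046741783805299821166752969504388047315010641231652977266299988798563026936) + 509952253580420232239680174495968593205031515453641464305131780685914880453373619364672*(a*b))*((1024*t-541)^7*(543-1024*t)^17)
     + ((-2284143159919529264520432148748765195818055085568870830617183823712677097531196305316079) + 1084538608564483677467723173601689333301943879852051623323266150734358346640786975336184*(a*b))*((1024*t-541)^8*(543-1024*t)^16)
     + ((-4064658694395097557827284239995417173606915315099068296495000239791797703353192098460528) + 1929651922571725688874838029463485520965289779069524856050414351161491363667415907526272*(a*b))*((1024*t-541)^9*(543-1024*t)^15)
     + ((-6102937705111135029480443117568541996304625275041937239256374701782428909572888136477992) + 2896854220250859948345363489618004177483982527255044974304156961190577084888274887557952*(a*b))*((1024*t-541)^10*(543-1024*t)^14)
     + ((-7774960368898002682065617476346083387448726543216322618450408196904360462030720383489680) + 3689931592567880599208875309197646889565785835669987819958189652655179032352877359127936*(a*b))*((1024*t-541)^11*(543-1024*t)^13)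
     + ((-8431104831044061878068551049144526186474762858915036617995456187166881334926994521080604) + 4000706241361666259487869839350735457086278429519583344730510616779056056755721956647136*(a*b))*((1024*t-541)^12*(543-1024*t)^12)
     + ((-7790169091134120866454827410462827030556365502154902447475126130615724809508226063242896) + 3695989416056543428816245257378723502327300084585142082958870508163181283387644261765504*(a*b))*((1024*t-541)^13*(543-1024*t)^11)
     + ((-6126837157283592479835564239239407268375043056399133889357756937746046301076231563275560) + 2906373657631299574781787558454711428371281836901922664876022918912738320460311531700032*(a*b))*((1024*t-541)^14*(543-1024*t)^10)
     + ((-4088558199093769827884934564536246063083140099851721704890367433088093351603794440188784) + 1939171360734968756765694439471772287757196301165092266585169306218770139671822499465856*(a*b))*((1024*t-541)^15*(543-1024*t)^9)
     + ((-2302067843596134072264136448929990883287432397310882328791629847708578906452399943244015) + 1091678188008855164936554526199422304500031806237295553172287314988795882434913347937272*(a*b))*((1024*t-541)^16*(543-1024*t)^8)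
     + ((-1084388475171646711207229995264712182074258310097847130924275010562213474977602463238136) + 514152006816386616062126872001664360821227992351754862998330379263613183182597162086720*(a*b))*((1024*t-541)^17*(543-1024*t)^7)
     + ((-422120495152839041600808785223994811685821314044305154554728645080149708646649904418244) + 200111858548865259193874543042853583431316502633411954594117099689640390893615801889568*(a*b))*((1024*t-541)^18*(543-1024*t)^6)
     + ((-133432124343763340982010272882297006340560919165252599635476529880616514670420421305864) + 63244993031705194171285312505080965302359770303379613198075431870602217042411330517184*(a*b))*((1024*t-541)^19*(543-1024*t)^5)
     + ((-33390815221011989680799898207653613218387887303610242039710717595217700139473449396610) + 15824199538507758201779841266046447719795782230681162987197062620018023828141230870032*(a*b))*((1024*t-541)^20*(543-1024*t)^4)
     + ((-6366410426757458634589717312219224196872040247718836152876686225046587677230845839336) + 3016601612429629150118350688164810177770811935177694305790903964383669920728161085376*(a*b))*((1024*t-541)^21*(543-1024*t)^3)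
     + ((-869001291709639517564184353968163814779265244562048161025669615285604574631432306964) + 411691559464847664034222373629858592790487236483864957675246898467021473964483293088*(a*b))*((1024*t-541)^22*(543-1024*t)^2)
     + ((-75639752182186992305039728052909175247995834050382782903861622871118685054416830488) + 35828569762061115630310961552274801088451020147239671276801986752361465966938474048*(a*b))*((1024*t-541)^23*(543-1024*t)^1)
     + ((-3154762513716629160366370561894563204508867485861291104289878551701927883580350465) + 1494078781737198420552221511081925002230718722827671547214447271026864166328852104*(a*b))*((1024*t-541)^24*(543-1024*t)^0)).
Qed.

Lemma T12_norm_increasing (a b x y : R) : sqrt23_bounds a b ->
  541/1024 <= x -> x < y -> y <= 543/1024 -> T12_norm x a b < T12_norm y a b.
Proof.
  intros Hab Hx Hxy Hy.
  apply (incr_function_le (fun t => T12_norm t a b) (Finite (541/1024)) (Finite (543/1024))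
           (fun t => T12_norm_deriv t a b)); simpl; try lra.
  - intros t _ _; unfold T12_norm, T12_norm_deriv; auto_derive; [exact I | ring].
  - intros t Hl Hh; apply T12_norm_deriv_pos; [exact Hab | lra].
Qed.

Notation T12_norm_at t := (T12_norm t (sqrt 2) (sqrt 3)).

Lemma T12_num_neg_left (t : R) : 0 < t <= 541/1024 -> T12_num t < 0.
Proof.
  intros Ht; assert (Ht1 : 0 < t < 1) by lra.
  apply (neg_of_scaled _ _ _ (T12_surd_form t Ht1)); [surd_den_pos |].
  pose proof (T12_free_neg t _ _ sqrt23_bounds_sqrt ltac:(lra)).
  destruct (Rle_lt_dec t (3787/8192)).
  - apply surd_neg_of_nonpos; [apply sqrt_q_pos | assumption |].
    apply T12_surd_nonpos; [exact sqrt23_bounds_sqrt | lra].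
  - apply (surd_neg_of_norm_neg _ _ _ _ (sqrt_q_sq t)); [assumption |].
    rewrite T12_norm_eq by (apply sqrt2_sq || apply sqrt3_sq).
    apply T12_norm_neg; [exact sqrt23_bounds_sqrt | lra].
Qed.

Lemma T12_num_pos_right (t : R) : 543/1024 <= t < 1 -> 0 < T12_num t.
Proof.
  intros Ht; assert (Ht1 : 0 < t < 1) by lra.
  apply (pos_of_scaled _ _ _ (T12_surd_form t Ht1)); [surd_den_pos |].
  destruct (Rle_lt_dec t (4825/8192)).
  - apply (surd_pos_of_norm_pos _ _ _ _ (sqrt_q_pos t) (sqrt_q_sq t)).
    + apply T12_surd_pos; [exact sqrt23_bounds_sqrt | lra].
    + rewrite T12_norm_eq by (apply sqrt2_sq || apply sqrt3_sq).
      apply T12_norm_pos; [exact sqrt23_bounds_sqrt | lra].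
  - apply surd_pos_of_nonneg; [apply sqrt_q_pos | |].
    + apply T12_free_pos; [exact sqrt23_bounds_sqrt | lra].
    + apply T12_surd_nonneg; [exact sqrt23_bounds_sqrt | lra].
Qed.

Lemma T12_num_neg_middle (t : R) :
  541/1024 <= t <= 543/1024 -> T12_norm_at t < 0 -> T12_num t < 0.
Proof.
  intros Ht HN; assert (Ht1 : 0 < t < 1) by lra.
  apply (neg_of_scaled _ _ _ (T12_surd_form t Ht1)); [surd_den_pos |].
  apply (surd_neg_of_norm_neg _ _ _ _ (sqrt_q_sq t)).
  - apply T12_free_neg; [exact sqrt23_bounds_sqrt | lra].
  - rewrite T12_norm_eq by (apply sqrt2_sq || apply sqrt3_sq); exact HN.
Qed.

Lemma T12_num_pos_middle (t : R) :
  541/1024 <= t <= 543/1024 -> 0 < T12_norm_at t -> 0 < T12_num t.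
Proof.
  intros Ht HN; assert (Ht1 : 0 < t < 1) by lra.
  apply (pos_of_scaled _ _ _ (T12_surd_form t Ht1)); [surd_den_pos |].
  apply (surd_pos_of_norm_pos _ _ _ _ (sqrt_q_pos t) (sqrt_q_sq t)).
  - apply T12_surd_pos; [exact sqrt23_bounds_sqrt | lra].
  - rewrite T12_norm_eq by (apply sqrt2_sq || apply sqrt3_sq); exact HN.
Qed.

Lemma T12_norm_neg_at_541 : T12_norm_at (541/1024) < 0.
Proof.
  assert (Ht1 : 0 < 541/1024 < 1) by lra.
  rewrite <- T12_norm_eq by (apply sqrt2_sq || apply sqrt3_sq).
  apply (norm_neg_of_surd_neg _ _ _ _ (sqrt_q_pos _) (sqrt_q_sq _)).
  - apply Rlt_le, T12_surd_pos; [exact sqrt23_bounds_sqrt | lra].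
  - rewrite <- (T12_surd_form _ Ht1).
    apply Rmult_neg_pos; [apply T12_num_neg_left; lra | surd_den_pos].
Qed.

Lemma T12_cfun_sign_change :
  exists delta, delta < 1 /\
    (forall t, 0 < t < delta -> T12 (cfun t) t < 0) /\
    (forall t, delta < t < 1 -> T12 (cfun t) t > 0).
Proof.
  destruct (increasing_sign_change (fun t => T12_norm_at t) (541/1024) (543/1024))
    as (d & Hd & Hneg & Hpos).
  - lra.
  - exact T12_norm_neg_at_541.
  - intros x y; apply T12_norm_increasing, sqrt23_bounds_sqrt.
  - exists d; split; [lra | split]; intros t Ht;
      pose proof (alpha1_neg t ltac:(lra)); rewrite T12_cfun by lra.
    + apply Rdiv_neg_pos; [| lra].
      destruct (Rle_lt_dec t (541/1024)).
      * apply T12_num_neg_left; lra.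
      * apply T12_num_neg_middle; [| apply Hneg]; lra.
    + apply Rdiv_lt_0_compat; [| lra].
      destruct (Rle_lt_dec (543/1024) t).
      * apply T12_num_pos_right; lra.
      * apply T12_num_pos_middle; [| apply Hpos]; lra.
Qed.

Lemma detT1_affine (c t : R) : 0 < t < 1 -> detT1 c t = alpha1 t * c + alpha0 t.
Proof.
  intros Ht; unfold detT1, T11, T12, T21, T22, alpha1, alpha0; abstract_surds t s a b.
  apply (eq_of_sub_combination _ _ (s * s - q t) (a * a - 2) (b * b - 3)
    (9 * (3 * t ^ 2 + 10 * t + 3) / (q t ^ 3 * (s * s))) (9 / (64 * t ^ 2))
    (1 / (9 * (t - 1) ^ 4))); [lra | lra | lra |].
  field_surds.
Qed.

Theorem lemma4 :
  (forall c t, 0 < t < 1 -> detT1 c t = alpha1 t * c + alpha0 t) /\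
  (forall t, 0 < t < 1 -> alpha1 t < 0) /\
  (forall t, 0 < t < 1 -> alpha0 t > 0) /\
  (forall t, 0 < t < 1 -> cfun t > 0) /\
  (forall t, 0 < t < 1 -> T11 (cfun t) t > 0) /\
  (exists delta, delta < 1 /\
     (forall t, 0 < t < delta -> T12 (cfun t) t < 0) /\
     (forall t, delta < t < 1 -> T12 (cfun t) t > 0)).
Proof.
  split; [exact detT1_affine |].
  split; [exact alpha1_neg |].
  split; [exact alpha0_pos |].
  split; [exact cfun_pos |].
  split; [exact T11_cfun_pos | exact T12_cfun_sign_change].
Qed.
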